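(* Let $P$ be a program and $SQ$ a stack-queue scheduling rule. Let $A,B,C,D$ be p-goals and $\underline{\pi}$ a shifting such that both $A|B|C|D$ and $A|B|C|B\underline{\pi}|D$ are defined (concatenations). If there is a p-SLD derivation $A|B|C|D\xrightarrow{SQ,X.P}Q$, then there exist a template $Y$ and a p-SLD derivation $A|B|C|B\underline{\pi}|D\xrightarrow{SQ,Y.P}R$ with $X\subseteq_L Y$ and $\#Q\le\#R$.
   Context: A p-atom is a pair $a[p]$ of an atom $a$ and a rational priority $p$. A p-goal is a finite set of p-atoms with pairwise distinct priorities, regarded as a list ordered by increasing priority; $\#G$ is its number of p-atoms. Substitutions act on atoms and leave priorities unchanged. A clause is $h\leftarrow B$ with $h$ an atom and $B$ a p-goal; a program is a finite set of clauses. For p-goals with no common priority, $F+G=F\cup G$; $F|G$ denotes $F+G$ when all priorities of $F$ are smaller than those of $G$. A shifting $\underline{\pi}$ is a strictly increasing bijection $\mathbb{Q}\to\mathbb{Q}$; $G\underline\pi$ replaces each priority $p$ by $\underline\pi(p)$. Priority derivation step: for a p-goal $a|F$ ($a$ of least priority), clause $c=(h\leftarrow B)$, renaming $\xi$ with $var(a|F)\cap var(c\xi)=\emptyset$, idempotent relevant mgu $\theta$ of $a$ and $h\xi$, shifting $\underline{\pi}$ with $F$, $B\xi\underline{\pi}$ sharing no priority: $a|F\xrightarrow{c\xi,\theta}(F+B\xi\underline{\pi})\theta$. A p-SLD derivation is a sequence of such steps with each renamed clause $c_j\xi_j$ variable-disjoint from the initial goal and all earlier renamed clauses; its template is the sequence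 of applied clauses. For templates, $X\subseteq_L Y$ means $X$ is a subsequence of $Y$. $G\xrightarrow{S,M.P}R$ denotes a p-SLD derivation with template $M$, all clauses in $P$, all steps in $S$. Lowering: for $c=(h\leftarrow B)$, a step $a\lambda\underline{\sigma}|(K\lambda\underline{\sigma}+X)\xrightarrow{c}(X+K\lambda\underline{\sigma}+B\xi''\underline{\theta}'')\alpha''$ is a lowering by $X$ of $a|K\xrightarrow{c}(K+B\xi'\underline{\theta}')\alpha'$; a congruent lowering if some shifting $\underline{\rho}$ has $K\underline{\rho}=K\underline{\sigma}$ and $B\underline{\theta}'\underline{\rho}=B\underline{\theta}''$. Steps are congruent lowerings of each other if each is a congruent lowering of the other. A set $S$ of steps is complete if (i) whenever some step $G\xrightarrow{c}\cdot$ exists, some step $G\xrightarrow{c}\cdot$ lies in $S$, and (ii) $S$ contains every step that is a congruent lowering of each other with a step of $S$. Stack-queue scheduling rule: a complete set $SQ$ of priority derivation steps such that for every clause $c=(h\leftarrow B)$ there are p-goals $M_s,M_q$ with $B=M_s|M_q$ such that every step $a|K\xrightarrow{c\xi,\mu}R$ in $SQ$ satisfies $R=(M_s\xi\underline{\gamma}|K|M_q\xi\underline{\gamma})\mu$ for some shifting $\underline{\gamma}$. *)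

From Stdlib Require List.
From mathcomp Require Import all_boot all_order all_algebra.
Set Implicit Arguments. Unset Strict Implicit. Unset Printing Implicit Defensive.
Import Order.TTheory GRing.Theory Num.Theory.
Local Open Scope ring_scope.

(* Variables are natural numbers; function and predicate symbols are natural
   numbers (a generic countable signature; arities are not fixed). *)
Inductive term : Type :=
| Var of nat
| Fun of nat & seq term.

Inductive atom : Type := Atom of nat & seq term.

Definition subst := nat -> term.

Fixpoint tsubst (s : subst) (t : term) : term :=
  match t with
  | Var x => s x
  | Fun f ts => Fun f (map (tsubst s) ts)
  end.

Definition asubst (s : subst) (a : atom) : atom :=
  let: Atom p ts := a in Atom p (map (tsubst s) ts).

Fixpoint tvars (t : term) : seq nat :=
  match t with
  | Var x => [:: x]
  | Fun _ ts => flatten (map tvars ts)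
  end.

Definition avars (a : atom) : seq nat :=
  let: Atom _ ts := a in flatten (map tvars ts).

Definition renaming (xi : subst) : Prop :=
  exists f : nat -> nat, [/\ bijective f,
    (exists s : seq nat, forall x, x \notin s -> f x = x) &
    forall x, xi x = Var (f x)].

Definition unifier (th : subst) (a b : atom) : Prop := asubst th a = asubst th b.

Definition idem_relevant_mgu (th : subst) (a b : atom) : Prop :=
  [/\ unifier th a b,
      (forall eta, unifier eta a b ->
         exists delta : subst, forall x, tsubst delta (th x) = eta x),
      (forall x, tsubst th (th x) = th x) &
      (forall x, th x <> Var x ->
         (x \in avars a ++ avars b) /\
         (forall y, y \in tvars (th x) -> y \in avars a ++ avars b))].

(* A p-goal is represented as the list of its p-atoms ordered by strictly
   increasing priority (so priorities are pairwise distinct). *)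
Definition patom := (atom * rat)%type.
Definition pgoal := seq patom.

Definition is_pgoal (G : pgoal) : bool := sorted (fun x y : patom => x.2 < y.2) G.

Definition prios (G : pgoal) : seq rat := map snd G.

Definition gvars (G : pgoal) : seq nat := flatten (map (fun p : patom => avars p.1) G).

Definition gsubst (s : subst) (G : pgoal) : pgoal :=
  map (fun p : patom => (asubst s p.1, p.2)) G.

Definition shifting (pi : rat -> rat) : Prop :=
  {homo pi : x y / x < y} /\ bijective pi.

Definition gshift (pi : rat -> rat) (G : pgoal) : pgoal :=
  map (fun p : patom => (p.1, pi p.2)) G.

Definition no_common_prio (F G : pgoal) : Prop :=
  forall p, p \in prios F -> p \in prios G -> False.

Definition pplus (F G : pgoal) : pgoal :=
  sort (fun x y : patom => x.2 <= y.2) (F ++ G).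

Record clause := Clause { chead : atom; cbody : pgoal }.

Definition is_clause (c : clause) : Prop := is_pgoal (cbody c).

Definition cvars (c : clause) : seq nat := avars (chead c) ++ gvars (cbody c).

Definition crename (xi : subst) (c : clause) : clause :=
  Clause (asubst xi (chead c)) (gsubst xi (cbody c)).

Definition disjoint_vars (s1 s2 : seq nat) : Prop :=
  forall x, x \in s1 -> x \in s2 -> False.

(* A step  a|F --(c xi, theta)--> (F + B xi pi) theta  together with its data. *)
Record pstep := PStep {
  st_goal : pgoal;
  st_clause : clause;
  st_ren : subst;
  st_mgu : subst;
  st_shift : rat -> rat;
  st_res : pgoal }.

Definition is_step (s : pstep) : Prop :=
  match st_goal s with
  | [::] => False
  | a :: F =>
      let c := st_clause s in
      let xi := st_ren s in
      let Bxipi := gshift (st_shift s) (gsubst xi (cbody c)) in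
      is_pgoal (st_goal s) /\ is_clause c /\ renaming xi /\
      disjoint_vars (gvars (st_goal s)) (cvars (crename xi c)) /\
      idem_relevant_mgu (st_mgu s) a.1 (asubst xi (chead c)) /\
      shifting (st_shift s) /\
      no_common_prio F Bxipi /\
      st_res s = gsubst (st_mgu s) (pplus F Bxipi)
  end.

Fixpoint chain (G : pgoal) (ds : seq pstep) (R : pgoal) : Prop :=
  match ds with
  | [::] => G = R
  | s :: ds' => st_goal s = G /\ chain (st_res s) ds' R
  end.

Definition rcvars (s : pstep) : seq nat := cvars (crename (st_ren s) (st_clause s)).

Fixpoint apart (used : seq nat) (ds : seq pstep) : Prop :=
  match ds with
  | [::] => True
  | s :: ds' => disjoint_vars (rcvars s) used /\ apart (used ++ rcvars s) ds'
  end.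

Definition pderiv (S : pstep -> Prop) (P : seq clause) (G : pgoal)
    (M : seq clause) (R : pgoal) : Prop :=
  exists ds : seq pstep,
    chain G ds R /\ map st_clause ds = M /\
    (forall s, List.In s ds -> is_step s) /\
    (forall s, List.In s ds -> S s) /\
    (forall s, List.In s ds -> List.In (st_clause s) P) /\
    apart (gvars G) ds.

Definition subseqL (T : Type) (X Y : seq T) : Prop := exists m : bitseq, X = mask m Y.

Definition lgoal (lam : subst) (sig : rat -> rat) (G : pgoal) : pgoal :=
  gshift sig (gsubst lam G).

Definition lowering_data (X : pgoal) (lam : subst) (sig : rat -> rat)
    (s2 s1 : pstep) : Prop :=
  exists a K, is_step s1 /\ is_step s2 /\ st_goal s1 = a :: K /\
    st_clause s2 = st_clause s1 /\ shifting sig /\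
    no_common_prio (lgoal lam sig K) X /\
    st_goal s2 = (asubst lam a.1, sig a.2) :: pplus (lgoal lam sig K) X.

Definition lowering (X : pgoal) (s2 s1 : pstep) : Prop :=
  exists lam sig, lowering_data X lam sig s2 s1.

Definition congruent_lowering (s2 s1 : pstep) : Prop :=
  exists X lam sig, lowering_data X lam sig s2 s1 /\
    exists a K, st_goal s1 = a :: K /\
    exists rho, [/\ shifting rho,
      gshift rho K = gshift sig K &
      gshift rho (gshift (st_shift s1) (cbody (st_clause s1)))
        = gshift (st_shift s2) (cbody (st_clause s1))].

Definition mutual_congruent_lowering (s1 s2 : pstep) : Prop :=
  congruent_lowering s1 s2 /\ congruent_lowering s2 s1.

Definition complete (S : pstep -> Prop) : Prop :=
  [/\ (forall s, S s -> is_step s),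
      (forall G c, (exists s, [/\ is_step s, st_goal s = G & st_clause s = c]) ->
         exists s, [/\ S s, is_step s, st_goal s = G & st_clause s = c]) &
      (forall s s', S s -> is_step s' -> mutual_congruent_lowering s' s -> S s')].

Definition stack_queue (SQ : pstep -> Prop) : Prop :=
  complete SQ /\
  forall c : clause, is_clause c ->
    exists Ms Mq : pgoal,
      [/\ is_pgoal (Ms ++ Mq), cbody c = Ms ++ Mq &
      forall s, SQ s -> st_clause s = c ->
        exists a K, st_goal s = a :: K /\
        exists gam, [/\ shifting gam,
          is_pgoal (gshift gam (gsubst (st_ren s) Ms) ++ K
                    ++ gshift gam (gsubst (st_ren s) Mq)) &
          st_res s = gsubst (st_mgu s)
             (gshift gam (gsubst (st_ren s) Ms) ++ K
              ++ gshift gam (gsubst (st_ren s) Mq))]].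

From Stdlib Require List.
From Stdlib Require Import Classical ClassicalEpsilon.
From mathcomp Require Import all_boot all_order all_algebra.
From mathcomp Require Import zify lra.
Set Implicit Arguments. Unset Strict Implicit. Unset Printing Implicit Defensive.
Import Order.TTheory GRing.Theory Num.Theory.

(* The derivation from [A | B | C | B pi | D] simulates the given one from
   [A | B | C | D]. Each atom of its current goal mirrors an atom of the original
   derivation, identified by a label. Atoms mirroring original ones are resolved
   as in the original derivation. The descendants of the inserted copy [B pi]
   sit behind [C]; under the stack-queue rule they reach the front only after the
   atoms they mirror have been resolved, and then replay those resolutions.
   Every mirrored atom is an instance of the original one under the answer
   substitution of the original derivation, so the replayed unifications
   succeed, while fresh renamings keep the steps variable-disjoint. Each replay
   resolves a distinct label, so the simulation terminates; it then still
   mirrors all atoms of [Q], whence [#Q <= #R], and the clauses applied to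
   original atoms form [X] in order, a subsequence of the new template. *)

Lemma flatten_map_In (T : Type) (f : T -> seq nat) (l : seq T) y :
  y \in flatten (map f l) -> exists2 t, List.In t l & y \in f t.
Proof.
elim: l => //= t l IH; rewrite mem_cat => /orP [H|/IH [u Hu Hy]].
  by exists t; [left|].
by exists u; [right|].
Qed.

Lemma mem_flatten_map (T : Type) (f : T -> seq nat) (l : seq T) y t :
  List.In t l -> y \in f t -> y \in flatten (map f l).
Proof.
elim: l => //= u l IH [->|Hin] Hy; rewrite mem_cat ?Hy //.
by rewrite (IH Hin Hy) orbT.
Qed.

Lemma In_nth (T : Type) (d : T) (s : seq T) p : p < size s -> List.In (nth d s p) s.
Proof. elim: s p => //= x s IH [|p] Hp; [by left | right; exact: IH]. Qed.

Lemma In_mem (T : eqType) (x : T) s : List.In x s -> x \in s.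
Proof. elim: s => //= y s IH [->|/IH H]; rewrite inE ?eqxx ?H ?orbT //. Qed.

Lemma eq_In_map (T1 T2 : Type) (f g : T1 -> T2) (l : seq T1) :
  (forall x, List.In x l -> f x = g x) -> map f l = map g l.
Proof.
elim: l => //= x l IH H; rewrite H; last by left.
by rewrite IH // => y Hy; apply: H; right.
Qed.

(** * Terms, atoms and substitutions *)

Section TermInd.
Variable Pt : term -> Prop.
Hypothesis Pt_Var : forall x, Pt (Var x).
Hypothesis Pt_Fun : forall f ts, List.Forall Pt ts -> Pt (Fun f ts).

Fixpoint term_ind' (t : term) : Pt t :=
  match t with
  | Var x => Pt_Var x
  | Fun f ts => Pt_Fun f ((fix go (l : seq term) : List.Forall Pt l :=
       match l with
       | [::] => List.Forall_nil _
       | u :: l' => List.Forall_cons _ (term_ind' u) (go l')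
       end) ts)
  end.

End TermInd.

Lemma tsubst_comp s1 s2 t :
  tsubst s2 (tsubst s1 t) = tsubst (fun x => tsubst s2 (s1 x)) t.
Proof.
elim/term_ind': t => [x|f ts IH] //=; congr Fun; rewrite -map_comp.
elim: ts IH => [|u ts IHts] //= /List.Forall_cons_iff [Hu Hts].
by rewrite Hu IHts.
Qed.

Lemma eq_tsubst s1 s2 t :
  (forall x, x \in tvars t -> s1 x = s2 x) -> tsubst s1 t = tsubst s2 t.
Proof.
elim/term_ind': t => [x|f ts IH] /= Hs; first by apply: Hs; rewrite inE.
congr Fun; elim: ts IH Hs => [|u ts IHts] //= /List.Forall_cons_iff [Hu Hts] Hs.
rewrite Hu ?IHts // => x Hx; apply: Hs; rewrite mem_cat Hx ?orbT //.
Qed.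

Lemma tsubst_Var t : tsubst Var t = t.
Proof.
elim/term_ind': t => [x|f ts IH] //=; congr Fun.
elim: ts IH => [|u ts IHts] //= /List.Forall_cons_iff [Hu Hts].
by rewrite Hu IHts.
Qed.

Lemma tvars_tsubst s t y :
  y \in tvars (tsubst s t) -> exists2 x, x \in tvars t & y \in tvars (s x).
Proof.
elim/term_ind': t => [x|f ts IH] /=; first by exists x; rewrite ?inE.
elim: ts IH => [|u ts IHts] //= /List.Forall_cons_iff [Hu Hts].
rewrite mem_cat => /orP [/Hu [x Hx Hy] | /(IHts Hts) [x Hx Hy]];
  exists x => //; rewrite mem_cat Hx ?orbT //.
Qed.

Lemma asubst_comp s1 s2 a :
  asubst s2 (asubst s1 a) = asubst (fun x => tsubst s2 (s1 x)) a.
Proof.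
case: a => p ts /=; rewrite -map_comp; congr Atom.
by apply: eq_map => t; exact: tsubst_comp.
Qed.

Lemma eq_asubst s1 s2 a :
  (forall x, x \in avars a -> s1 x = s2 x) -> asubst s1 a = asubst s2 a.
Proof.
case: a => p ts /= Hs; congr Atom.
elim: ts Hs => //= t ts IH Hs; rewrite (eq_tsubst (s2 := s2)) ?IH // => x Hx;
  apply: Hs; rewrite mem_cat Hx ?orbT //.
Qed.

Lemma asubst_Var a : asubst Var a = a.
Proof. by case: a => p ts /=; congr Atom; elim: ts => //= t ts ->; rewrite tsubst_Var. Qed.

Lemma avars_asubst s a y :
  y \in avars (asubst s a) -> exists2 x, x \in avars a & y \in tvars (s x).
Proof.
case: a => p ts /=; elim: ts => //= t ts IH.
rewrite mem_cat => /orP [/tvars_tsubst [x Hx Hy]|/IH [x Hx Hy]];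
  exists x => //; rewrite mem_cat Hx ?orbT //.
Qed.

(** * Existence of most general unifiers *)

Definition unifies (s : subst) (E : seq (term * term)) : Prop :=
  List.Forall (fun e => tsubst s e.1 = tsubst s e.2) E.

Definition eqn_vars (E : seq (term * term)) : seq nat :=
  flatten (map (fun e => tvars e.1 ++ tvars e.2) E).

Fixpoint tsize t := if t is Fun _ ts then (sumn (map tsize ts)).+1 else 1.

Definition eqn_size (E : seq (term * term)) := sumn (map (fun e => tsize e.1 + tsize e.2) E).

(* [eta \o s = eta] for every unifier [eta] makes [s] both most general and
   idempotent at once. *)
Definition relevant_mgu (s : subst) (E : seq (term * term)) : Prop :=
  [/\ unifies s E,
      (forall eta, unifies eta E -> forall x, tsubst eta (s x) = eta x) &
      (forall x, s x <> Var x ->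
         x \in eqn_vars E /\ forall y, y \in tvars (s x) -> y \in eqn_vars E)].

Lemma unifiesP s E : unifies s E <-> forall e, List.In e E -> tsubst s e.1 = tsubst s e.2.
Proof. exact: List.Forall_forall. Qed.

Lemma unifies_cons s l r E : unifies s ((l, r) :: E) <-> tsubst s l = tsubst s r /\ unifies s E.
Proof. by split => [/List.Forall_cons_iff | [H1 H2]]; [|constructor]. Qed.

Lemma unifies_cat s E1 E2 : unifies s (E1 ++ E2) <-> unifies s E1 /\ unifies s E2.
Proof. exact: List.Forall_app. Qed.

Lemma eqn_varsP E y :
  y \in eqn_vars E -> exists2 e, List.In e E & (y \in tvars e.1) || (y \in tvars e.2).
Proof. by move/flatten_map_In => [e He Hy]; exists e => //; rewrite -mem_cat. Qed.

Lemma mem_eqn_vars E y e :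
  List.In e E -> (y \in tvars e.1) || (y \in tvars e.2) -> y \in eqn_vars E.
Proof. by move=> He Hy; apply: (mem_flatten_map He); rewrite mem_cat. Qed.

Lemma eqn_vars_swap l r E x : (x \in eqn_vars ((l, r) :: E)) = (x \in eqn_vars ((r, l) :: E)).
Proof. by rewrite /eqn_vars /= !mem_cat; case: (x \in tvars l); case: (x \in tvars r). Qed.

Lemma relevant_mgu_swap s l r E :
  relevant_mgu s ((l, r) :: E) -> relevant_mgu s ((r, l) :: E).
Proof.
move=> [/unifies_cons [Hlr HE] Hgen Hrel]; split.
- by apply/unifies_cons; split.
- by move=> eta /unifies_cons [Hrl HE']; apply: Hgen; apply/unifies_cons.
- by move=> x /Hrel [Hx Hy]; rewrite -eqn_vars_swap; split => // y /Hy; rewrite eqn_vars_swap.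
Qed.

Lemma relevant_mgu_same_var s x E :
  relevant_mgu s E -> relevant_mgu s ((Var x, Var x) :: E).
Proof.
have subE : {subset eqn_vars E <= eqn_vars ((Var x, Var x) :: E)}.
  by move=> y Hy; rewrite /eqn_vars /= -/(eqn_vars E) !inE Hy !orbT.
move=> [Hu Hgen Hrel]; split.
- by apply/unifies_cons.
- by move=> eta /unifies_cons [_ ?]; apply: Hgen.
- by move=> z /Hrel [Hz Hz']; split => [|w /Hz' Hw]; exact: subE.
Qed.

Lemma relevant_mgu_nil : relevant_mgu Var [::].
Proof. by split. Qed.

Lemma tsize_gt0 t : 0 < tsize t. Proof. by case: t. Qed.

Lemma tsize_occurs s x t : x \in tvars t -> tsize (s x) <= tsize (tsubst s t).
Proof.
elim/term_ind': t => [y|f ts IH] /=; first by rewrite inE => /eqP ->.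
move=> Hx; apply: leqW; elim: ts IH Hx => //= u ts IHts /List.Forall_cons_iff [Hu Hts].
rewrite mem_cat => /orP [/Hu H | /(IHts Hts) H]; first exact: leq_trans H (leq_addr _ _).
exact: leq_trans H (leq_addl _ _).
Qed.

Lemma tsize_occurs_lt s x t :
  x \in tvars t -> t <> Var x -> tsize (s x) < tsize (tsubst s t).
Proof.
case: t => [y|f ts] /=; first by rewrite inE => /eqP ->.
move=> Hx _; rewrite ltnS; elim: ts Hx => //= u ts IHts.
rewrite mem_cat => /orP [/(tsize_occurs s) H | /IHts H]; first exact: leq_trans H (leq_addr _ _).
exact: leq_trans H (leq_addl _ _).
Qed.

Lemma size_undup_sub (s1 s2 : seq nat) :
  {subset s1 <= s2} -> size (undup s1) <= size (undup s2).
Proof.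
move=> Hsub; apply: uniq_leq_size; first exact: undup_uniq.
by move=> y; rewrite !mem_undup; apply: Hsub.
Qed.

Lemma size_undup_sub_lt (s1 s2 : seq nat) x :
  {subset s1 <= s2} -> x \notin s1 -> x \in s2 -> size (undup s1) < size (undup s2).
Proof.
move=> Hsub Hx1 Hx2; have: size (x :: undup s1) <= size (undup s2) by
  apply: uniq_leq_size; [rewrite /= mem_undup Hx1 undup_uniq
  | by move=> y; rewrite inE mem_undup => /orP [/eqP ->|/Hsub]; rewrite mem_undup].
by [].
Qed.

Definition bind (x : nat) (r : term) : subst := fun y => if y == x then r else Var y.

Lemma tvars_bind x r t y : x \notin tvars r -> y \in tvars (tsubst (bind x r) t) ->
  y != x /\ (y \in tvars t \/ y \in tvars r).
Proof.
move=> Hx /tvars_tsubst [z Hz]; rewrite /bind; case: eqP => [Ezx Hy|Hzx].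
  by split; [apply/eqP => Eyx; move: Hx; rewrite -Eyx Hy | right].
by rewrite inE => /eqP ->; split; [apply/eqP | left].
Qed.

Lemma tsubst_bind_notin x r t : x \notin tvars t -> tsubst (bind x r) t = t.
Proof.
move=> Hx; rewrite -[RHS]tsubst_Var; apply: eq_tsubst => y Hy; rewrite /bind.
by case: eqP => // Eyx; move: Hx; rewrite -Eyx Hy.
Qed.

Section VariableElimination.
Variables (x : nat) (r : term) (E : seq (term * term)).
Hypothesis r_nonvar : r <> Var x.

Let Ex := (Var x, r) :: E.
Let E' := map (fun e => (tsubst (bind x r) e.1, tsubst (bind x r) e.2)) E.

Lemma unifies_bind s :
  (forall y, s y = tsubst s (bind x r y)) -> unifies s E -> unifies s E'.
Proof.
move=> Hs /unifiesP HE; apply/unifiesP => e' /List.in_map_iff [e [<- He]] /=.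
by rewrite !tsubst_comp -!(@eq_tsubst s) ?HE // => y _; rewrite Hs.
Qed.

(* Solving [x = r] by substitution eliminates [x], so the number of variables drops. *)
Lemma relevant_mgu_elim :
  (forall F, size (undup (eqn_vars F)) < size (undup (eqn_vars Ex)) ->
     (exists eta, unifies eta F) -> exists s, relevant_mgu s F) ->
  (exists eta, unifies eta Ex) -> exists s, relevant_mgu s Ex.
Proof.
move=> IH [eta /unifies_cons [/= Hx HE]].
have xr : x \notin tvars r.
  by apply/negP => Hin; have := tsize_occurs_lt eta Hin r_nonvar; rewrite Hx ltnn.
have Hxr : forall y, (y == x) || (y \in tvars r) -> y \in eqn_vars Ex.
  by move=> y Hy; apply: (mem_eqn_vars (e := (Var x, r))); [left | rewrite /= inE].
have HE' : forall y, y \in eqn_vars E' -> y != x /\ y \in eqn_vars Ex.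
  move=> y /eqn_varsP [e' /List.in_map_iff [e [<- He]]] /= Hy.
  have {}Hy : y != x /\ ((y \in tvars e.1) || (y \in tvars e.2) \/ y \in tvars r).
    by case/orP: Hy => /(tvars_bind xr) [Hyx [Hy|Hy]]; split => //;
      [left; rewrite Hy | right | left; rewrite Hy orbT | right].
  case: Hy => Hyx [Hy|Hy]; split => //; last by apply: Hxr; rewrite Hy orbT.
  by apply: (mem_eqn_vars (e := e)); [right|].
have bindK : forall s, s x = tsubst s r -> forall y, s y = tsubst s (bind x r y).
  by move=> s Hsx y; rewrite /bind; case: eqP => [->|].
have [s' [Hs'u Hs'gen Hs'rel]] : exists s', relevant_mgu s' E'.
  apply: IH; last by exists eta; apply: unifies_bind => //; exact: bindK.
  apply: (@size_undup_sub_lt _ _ x); first by move=> y /HE' [].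
    by apply/negP => /HE' [] /eqP.
  by apply: Hxr; rewrite eqxx.
pose s y := tsubst s' (bind x r y).
have sr : tsubst s r = tsubst s' r by rewrite /s -tsubst_comp tsubst_bind_notin.
exists s; split.
- apply/unifies_cons; split; first by rewrite /= sr /s /bind eqxx.
  apply/unifiesP => e He; rewrite /s -!tsubst_comp.
  move/unifiesP: Hs'u => /(_ (tsubst (bind x r) e.1, tsubst (bind x r) e.2)); apply.
  by apply/List.in_map_iff; exists e.
- move=> eta' /unifies_cons [/= Hx' Hu] y.
  have Hu' : unifies eta' E' by apply: unifies_bind => //; exact: bindK.
  rewrite /s tsubst_comp -(@eq_tsubst eta') => [|z _]; last by rewrite Hs'gen.
  by rewrite -bindK.
- move=> y; rewrite /s /bind; case: eqP => [-> _|Hyx Hy].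
    split=> [|z /tvars_tsubst [w Hw Hz]]; first by apply: Hxr; rewrite eqxx.
    case: (classic (s' w = Var w)) => Ew.
      by move: Hz; rewrite Ew inE => /eqP ->; apply: Hxr; rewrite Hw orbT.
    by have [_ /(_ z Hz) /HE' []] := Hs'rel w Ew.
  by have [/HE' [_ ?] Hy'] := Hs'rel y Hy; split => // z /Hy' /HE' [].
Qed.

End VariableElimination.

Lemma unifies_zip s f ts us : size ts = size us ->
  (tsubst s (Fun f ts) = tsubst s (Fun f us) <-> unifies s (zip ts us)).
Proof.
move=> /= Hs; split => [[]|Hu]; last first.
  congr Fun; elim: ts us Hs Hu => [|t ts IH] [|u us] //= [Hs] /unifies_cons [Htu Hts].
  by rewrite Htu (IH us Hs).
elim: ts us Hs => [|t ts IH] [|u us] //= => [_ _|[Hs] [Htu Hts]]; first by constructor.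
by apply/unifies_cons; split; [|apply: IH].
Qed.

Lemma eqn_vars_zip ts us y : size ts = size us ->
  (y \in eqn_vars (zip ts us)) = (y \in flatten (map tvars ts)) || (y \in flatten (map tvars us)).
Proof.
elim: ts us => [|t ts IH] [|u us] //= [] Hs; rewrite /eqn_vars /= -/(eqn_vars _) !mem_cat IH //.
by case: (y \in tvars t); case: (y \in tvars u); case: (y \in flatten _); case: (y \in flatten _).
Qed.

Lemma eqn_size_zip ts us : size ts = size us ->
  eqn_size (zip ts us) = sumn (map tsize ts) + sumn (map tsize us).
Proof.
elim: ts us => [|t ts IH] [|u us] //= [] Hs; rewrite /eqn_size /= -/(eqn_size _) IH //.
by rewrite !addnA (addnAC (tsize t)).
Qed.

Lemma relevant_mgu_decompose s f ts us E : size ts = size us ->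
  relevant_mgu s (zip ts us ++ E) -> relevant_mgu s ((Fun f ts, Fun f us) :: E).
Proof.
move=> Hsz [Hu Hgen Hrel].
have Hmem z : (z \in eqn_vars (zip ts us ++ E)) = (z \in eqn_vars ((Fun f ts, Fun f us) :: E)).
  rewrite /eqn_vars map_cat flatten_cat -/(eqn_vars _) -/(eqn_vars _) mem_cat eqn_vars_zip //.
  by rewrite /eqn_vars /= !mem_cat -!orbA.
have Hun sg : unifies sg ((Fun f ts, Fun f us) :: E) -> unifies sg (zip ts us ++ E).
  by move=> /unifies_cons [H1 H2]; apply/unifies_cat; split => //; exact/(unifies_zip sg f Hsz).
split.
- by move/unifies_cat: Hu => [H1 H2]; apply/unifies_cons; split => //; exact/(unifies_zip s f Hsz).
- by move=> eta /Hun; apply: Hgen.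
- by move=> z /Hrel; rewrite !Hmem => -[Hz Hy]; split => // w; rewrite -Hmem; apply: Hy.
Qed.

Lemma relevant_mgu_exists_rec k :
  (forall F, size (undup (eqn_vars F)) < k -> (exists eta, unifies eta F) ->
     exists s, relevant_mgu s F) ->
  forall m E, size (undup (eqn_vars E)) <= k -> eqn_size E <= m ->
    (exists eta, unifies eta E) -> exists s, relevant_mgu s E.
Proof.
move=> IHk; elim => [|m IHm] [|[l r] E] Hk Hm Hu; try by exists Var; exact: relevant_mgu_nil.
  by move: Hm; rewrite /eqn_size /= leqn0 !addn_eq0; case: (l).
have IHk' : forall F, size (undup (eqn_vars F)) < size (undup (eqn_vars ((l, r) :: E))) ->
    (exists eta, unifies eta F) -> exists s, relevant_mgu s F.
  by move=> F HF; apply: IHk; apply: leq_trans Hk.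
have HmE : eqn_size E <= m.
  move: Hm; rewrite /eqn_size /= -/(eqn_size _).
  by have := tsize_gt0 l; have := tsize_gt0 r; lia.
have subE : {subset eqn_vars E <= eqn_vars ((l, r) :: E)}.
  by move=> y; rewrite /eqn_vars /= mem_cat orbC => ->.
case: l Hk Hm Hu IHk' subE => [x|f ts]; case: r => [y|g us] Hk Hm Hu IHk' subE.
- have [Exy|Hxy] := eqVneq x y; last first.
    by apply: relevant_mgu_elim => // -[] /eqP; rewrite eq_sym (negPf Hxy).
  subst y.
  have [|s Hs] := IHm E (leq_trans (size_undup_sub subE) Hk) HmE.
    by case: Hu => eta /unifies_cons [_ HE]; exists eta.
  by exists s; apply: relevant_mgu_same_var.
- exact: relevant_mgu_elim.
- have [s Hs] : exists s, relevant_mgu s ((Var y, Fun f ts) :: E).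
    apply: relevant_mgu_elim => // [F HF|].
      apply: IHk'; apply: (leq_trans HF); apply: size_undup_sub => z.
      by rewrite eqn_vars_swap.
    by case: Hu => eta /unifies_cons [H1 H2]; exists eta; apply/unifies_cons.
  by exists s; apply: relevant_mgu_swap.
- case: Hu => eta /unifies_cons [/= [] <- Hmap HE].
  have Hsz : size ts = size us by rewrite -(size_map (tsubst eta) ts) Hmap size_map.
  have [|||sg Hsg] := IHm (zip ts us ++ E); last by exists sg; exact: relevant_mgu_decompose.
  + apply: leq_trans Hk; apply: size_undup_sub => z.
    rewrite /eqn_vars map_cat flatten_cat -/(eqn_vars _) -/(eqn_vars _) mem_cat eqn_vars_zip //.
    by rewrite /eqn_vars /= !mem_cat -!orbA.
  + move: Hm; rewrite /eqn_size map_cat sumn_cat -/(eqn_size _) -/(eqn_size _) eqn_size_zip //.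
    by rewrite /eqn_size /= -/(eqn_size _); lia.
  + exists eta; apply/unifies_cat; split => //.
    by apply/(unifies_zip _ f Hsz) => /=; rewrite Hmap.
Qed.

Lemma relevant_mgu_exists E : (exists eta, unifies eta E) -> exists s, relevant_mgu s E.
Proof.
suff: forall k E, size (undup (eqn_vars E)) <= k -> (exists eta, unifies eta E) ->
  exists s, relevant_mgu s E by apply.
elim => [|k IHk] F Hk.
  exact: (relevant_mgu_exists_rec (k := 0) _ (m := eqn_size F)).
exact: (relevant_mgu_exists_rec (k := k.+1) _ (m := eqn_size F)).
Qed.

Lemma idem_relevant_mgu_exists a b eta :
  asubst eta a = asubst eta b -> exists th, idem_relevant_mgu th a b.
Proof.
case: a b => p ts [q us] /= [] <- Hmap.
have Hsz : size ts = size us by rewrite -(size_map (tsubst eta) ts) Hmap size_map.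
have Hunif sg : unifier sg (Atom p ts) (Atom p us) <-> unifies sg (zip ts us).
  by rewrite -(unifies_zip _ p Hsz) /unifier /=; split => [[->]|[->]].
have [|s [Hu Hgen Hrel]] := @relevant_mgu_exists (zip ts us).
  by exists eta; apply/Hunif; rewrite /unifier /= Hmap.
have Hgen' eta' : unifier eta' (Atom p ts) (Atom p us) -> forall x, tsubst eta' (s x) = eta' x.
  by move/Hunif; apply: Hgen.
exists s; split.
- exact/Hunif.
- by move=> eta' /Hgen' H; exists eta'.
- by move=> x; apply: Hgen'; apply/Hunif.
- move=> x /Hrel [Hx Hy]; rewrite /= mem_cat -eqn_vars_zip //.
  by split => // y /Hy; rewrite mem_cat -eqn_vars_zip.
Qed.

Lemma idem_relevant_mgu_vars th a b x y : idem_relevant_mgu th a b ->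
  y \in tvars (th x) -> y = x \/ y \in avars a ++ avars b.
Proof.
move=> [_ _ _ Hrel] Hy; case: (classic (th x = Var x)) => [Ex|/Hrel [_ /(_ y Hy)]]; last by right.
by left; move: Hy; rewrite Ex inE => /eqP.
Qed.

(** * p-goals, shiftings and fresh renamings *)

Lemma map_fst_gsubst s (G : pgoal) : map fst (gsubst s G) = map (asubst s) (map fst G).
Proof. by rewrite /gsubst -!map_comp. Qed.

Lemma map_fst_gshift g (G : pgoal) : map fst (gshift g G) = map fst G.
Proof. by rewrite /gshift -map_comp. Qed.

Lemma prios_gsubst s G : prios (gsubst s G) = prios G.
Proof. by rewrite /prios /gsubst -map_comp. Qed.

Lemma prios_gshift g G : prios (gshift g G) = map g (prios G).
Proof. by rewrite /prios /gshift -!map_comp. Qed.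

Lemma is_pgoal_gsubst s G : is_pgoal (gsubst s G) = is_pgoal G.
Proof.
rewrite /is_pgoal /gsubst sorted_map; apply/idP/idP; apply: sub_sorted; by move=> x y.
Qed.

Lemma gsubst_Var G : gsubst Var G = G.
Proof. rewrite /gsubst -[RHS]map_id; apply: eq_map => -[a p] /=; by rewrite asubst_Var. Qed.

Lemma gshift_id G : gshift id G = G.
Proof. rewrite /gshift -[RHS]map_id; by apply: eq_map => -[a p]. Qed.

Lemma pplus_nil K : is_pgoal K -> pplus K [::] = K.
Proof.
move=> H; rewrite /pplus cats0 sorted_sort //.
  by move=> x y z /= ; apply: le_trans.
by apply: sub_sorted H => x y /ltW.
Qed.

Lemma shifting_id : shifting id.
Proof. by split => //; exists id. Qed.

Lemma shifting_translate (t : rat) : shifting (fun q => q + t)%R.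
Proof.
split; first by move=> x y /=; rewrite ltrD2r.
by exists (fun q => q - t)%R => q /=; rewrite ?addrK ?subrK.
Qed.

Definition max_abs (s : seq rat) : rat := foldr (fun x acc => Num.max `|x| acc)%R 0%R s.

Lemma max_abs_ge0 s : (0 <= max_abs s)%R.
Proof. elim: s => //= x s IH; by rewrite le_max IH orbT. Qed.

Lemma max_abs_ge s x : x \in s -> (`|x| <= max_abs s)%R.
Proof.
elim: s => //= y s IH; rewrite inE => /orP [/eqP ->|/IH H]; rewrite le_max ?lexx //.
by rewrite H orbT.
Qed.

Lemma no_common_prio_translate (K G : pgoal) :
  no_common_prio K (gshift (fun q => q + (max_abs (prios K) + max_abs (prios G) + 1))%R G).
Proof.
move=> p Hp; rewrite prios_gshift => /mapP [q Hq Ep].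
have h1 := max_abs_ge Hp; have h2 := max_abs_ge Hq; have h3 := max_abs_ge0 (prios K).
have h4 := ler_norm p; have h5 : (- `|q| <= q)%R by rewrite lerNnormlW.
move: Ep; set m1 := max_abs (prios K); set m2 := max_abs (prios G) => Ep.
have : (p < q + (m1 + m2 + 1))%R.
  have h6 : (- m2 <= q)%R by apply: le_trans h5; rewrite lerN2.
  have h7 : (p <= m1)%R by apply: le_trans h1.
  lra.
by rewrite Ep ltxx.
Qed.

Definition swap_block (N M x : nat) : nat :=
  if x < M then x + N else if (N <= x) && (x < N + M) then x - N else x.

Lemma swap_blockK N M : M <= N -> cancel (swap_block N M) (swap_block N M).
Proof.
move=> H x; rewrite /swap_block; case: (ltnP x M) => H1.
  have -> : (x + N < M) = false by apply/negbTE; rewrite -leqNgt; lia.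
  have -> : (N <= x + N) && (x + N < N + M) by apply/andP; split; lia.
  by rewrite addnK.
case: (boolP ((N <= x) && (x < N + M))) => /= H2.
  have -> : x - N < M by lia.
  by rewrite subnK //; case/andP: H2.
by rewrite ltnNge H1 /= (negbTE H2).
Qed.

(* A renaming must be a permutation of the variables, so the shift [v |-> v + N]
   of the variables below [M] is completed to the swap of two blocks. *)
Definition swap_renaming N M : subst := fun x => Var (swap_block N M x).

Lemma renaming_swap N M : M <= N -> renaming (swap_renaming N M).
Proof.
move=> H; exists (swap_block N M); split => //.
  by exists (swap_block N M); apply: swap_blockK.
exists (iota 0 (N + M)) => x; rewrite mem_iota /= add0n -leqNgt => Hx.
rewrite /swap_block; have -> : (x < M) = false by apply/negbTE; rewrite -leqNgt; lia.
by have -> : (N <= x) && (x < N + M) = false by apply/negbTE; rewrite negb_and -!leqNgt; lia.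
Qed.

Lemma swap_renaming_lt N M v : v < M -> swap_renaming N M v = Var (v + N).
Proof. by rewrite /swap_renaming /swap_block => ->. Qed.

Definition var_sup (s : seq nat) : nat := (foldr maxn 0 s).+1.

Lemma var_sup_gt s v : v \in s -> v < var_sup s.
Proof.
rewrite /var_sup ltnS; elim: s => //= x s IH; rewrite inE => /orP [/eqP ->|/IH H].
  by rewrite leq_maxl.
by rewrite (leq_trans H) // leq_maxr.
Qed.

Lemma gvarsP (G : pgoal) y : y \in gvars G -> exists2 p, List.In p G & y \in avars p.1.
Proof. exact: flatten_map_In. Qed.

Lemma mem_gvars (G : pgoal) y p : List.In p G -> y \in avars p.1 -> y \in gvars G.
Proof. exact: mem_flatten_map. Qed.

Lemma cvars_crename xi c y :
  y \in cvars (crename xi c) -> exists2 x, x \in cvars c & y \in tvars (xi x).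
Proof.
rewrite /cvars /= mem_cat => /orP [/avars_asubst [x Hx Hy]|].
  by exists x; rewrite ?mem_cat ?Hx.
move=> /gvarsP [_ /List.in_map_iff [p [<- Hp]]] /avars_asubst [x Hx Hy].
by exists x; rewrite ?mem_cat ?(mem_gvars Hp Hx) ?orbT.
Qed.

Lemma swap_renamed_vars c N M y : (forall v, v \in cvars c -> v < M) -> M <= N ->
  y \in cvars (crename (swap_renaming N M) c) -> N <= y < N + M.
Proof.
move=> HcM HMN /cvars_crename [x /HcM Hx]; rewrite swap_renaming_lt // inE => /eqP ->.
by apply/andP; split; lia.
Qed.

(** * Priority derivation steps *)

Definition sq_split (SQ : pstep -> Prop) (c : clause) (Ms Mq : pgoal) : Prop :=
  [/\ is_pgoal (Ms ++ Mq), cbody c = Ms ++ Mq &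
      forall s, SQ s -> st_clause s = c ->
        exists a K, st_goal s = a :: K /\
        exists gam, [/\ shifting gam,
          is_pgoal (gshift gam (gsubst (st_ren s) Ms) ++ K
                    ++ gshift gam (gsubst (st_ren s) Mq)) &
          st_res s = gsubst (st_mgu s)
             (gshift gam (gsubst (st_ren s) Ms) ++ K
              ++ gshift gam (gsubst (st_ren s) Mq))]].

Lemma sq_split_choice SQ : stack_queue SQ ->
  exists spl : clause -> pgoal * pgoal, forall c, is_clause c -> sq_split SQ c (spl c).1 (spl c).2.
Proof.
move=> [_ Hsplit].
apply: (choice (fun c (pr : pgoal * pgoal) => is_clause c -> sq_split SQ c pr.1 pr.2)) => c.
case: (classic (is_clause c)) => Hc; last by exists ([::], [::]).
by have [Ms [Mq H]] := Hsplit c Hc; exists (Ms, Mq).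
Qed.

Lemma sq_res_atoms SQ c Ms Mq s a K : sq_split SQ c Ms Mq -> SQ s -> st_clause s = c ->
  st_goal s = a :: K ->
  map fst (st_res s) = map (asubst (st_mgu s))
     (map (asubst (st_ren s)) (map fst Ms) ++ map fst K ++ map (asubst (st_ren s)) (map fst Mq))
  /\ is_pgoal (st_res s).
Proof.
move=> [_ _ H] Hs Hc Hg; have [a' [K' [Hg' [gam [_ Hp ->]]]]] := H s Hs Hc.
move: Hg'; rewrite Hg => -[_ EK]; subst K'.
rewrite is_pgoal_gsubst Hp map_fst_gsubst !map_cat !map_fst_gshift !map_fst_gsubst; by split.
Qed.

Lemma congruent_lowering_same s1 s2 : is_step s1 -> is_step s2 -> st_goal s1 = st_goal s2 ->
  st_clause s1 = st_clause s2 -> st_shift s1 = st_shift s2 -> congruent_lowering s2 s1.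
Proof.
move=> H1 H2 Hg Hc Hsh.
have [a [K HG]] : exists a K, st_goal s1 = a :: K.
  by move: H1; rewrite /is_step; case: (st_goal s1) => // a K _; exists a, K.
have HK : is_pgoal K.
  move: H1; rewrite /is_step HG => -[Hp _]; move: Hp; rewrite /is_pgoal /=; exact: path_sorted.
exists [::], Var, id; split.
  exists a, K; do 6 (try split) => //.
  - by exists id.
  - by rewrite -Hg HG /lgoal gsubst_Var gshift_id pplus_nil // asubst_Var; case: (a).
exists a, K; split => //; exists id; split => //; first exact: shifting_id.
by rewrite gshift_id Hsh Hc.
Qed.

Lemma is_step_intro G a K c xi mu g r :
  G = a :: K -> is_pgoal G -> is_clause c -> renaming xi ->
  disjoint_vars (gvars G) (cvars (crename xi c)) ->
  idem_relevant_mgu mu a.1 (asubst xi (chead c)) -> shifting g ->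
  no_common_prio K (gshift g (gsubst xi (cbody c))) ->
  r = gsubst mu (pplus K (gshift g (gsubst xi (cbody c)))) ->
  is_step (PStep G c xi mu g r).
Proof. by move=> -> H1 H2 H3 H4 H5 H6 H7 H8; rewrite /is_step /=. Qed.

Lemma is_step_elim s a K : is_step s -> st_goal s = a :: K ->
  [/\ is_pgoal (st_goal s), is_clause (st_clause s), renaming (st_ren s),
      disjoint_vars (gvars (st_goal s)) (cvars (crename (st_ren s) (st_clause s))) &
   [/\ idem_relevant_mgu (st_mgu s) a.1 (asubst (st_ren s) (chead (st_clause s))),
      shifting (st_shift s),
      no_common_prio K (gshift (st_shift s) (gsubst (st_ren s) (cbody (st_clause s)))) &
      st_res s = gsubst (st_mgu s)
        (pplus K (gshift (st_shift s) (gsubst (st_ren s) (cbody (st_clause s)))))]].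
Proof.
rewrite /is_step => + HG; rewrite HG => -[H1 [H2 [H3 [H4 [H5 [H6 [H7 H8]]]]]]].
by split => //; rewrite HG.
Qed.

(* Completeness provides a step in [SQ] for the goal and clause; the same step
   with our renaming and mgu but its shifting is a mutual congruent lowering of
   it, hence also in [SQ]. *)
Lemma sq_step_exists SQ (G : pgoal) a K c xi mu :
  stack_queue SQ ->
  G = a :: K -> is_pgoal G -> is_clause c -> renaming xi ->
  disjoint_vars (gvars G) (cvars (crename xi c)) ->
  idem_relevant_mgu mu a.1 (asubst xi (chead c)) ->
  exists s, [/\ SQ s, is_step s, st_goal s = G, st_clause s = c & st_ren s = xi /\ st_mgu s = mu].
Proof.
move=> [[Hst Hex Hcl] _] HG Hp Hc Hxi Hd Hmu.
set t := (max_abs (prios K) + max_abs (prios (gsubst xi (cbody c))) + 1)%R.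
set s0 := PStep G c xi mu (fun q => q + t)%R
   (gsubst mu (pplus K (gshift (fun q => q + t)%R (gsubst xi (cbody c))))).
have Hs0 : is_step s0.
  apply: is_step_intro HG _ _ _ _ _ _ _ _ => //;
    [exact: shifting_translate | exact: no_common_prio_translate].
have [s1 [Hs1 Hs1' Hg1 Hc1]] := Hex G c (ex_intro _ s0 (And3 Hs0 erefl erefl)).
set s2 := PStep G c xi mu (st_shift s1)
   (gsubst mu (pplus K (gshift (st_shift s1) (gsubst xi (cbody c))))).
have [_ _ _ _ [_ Hsh Hnc _]] := is_step_elim Hs1' (etrans Hg1 HG).
have Hs2 : is_step s2.
  apply: is_step_intro HG _ _ _ _ _ _ _ _ => //.
  by move: Hnc; rewrite /no_common_prio !prios_gshift !prios_gsubst Hc1.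
exists s2; split => //; apply: (Hcl s1 s2) => //; split.
  by apply: congruent_lowering_same => //; rewrite Hg1.
by apply: congruent_lowering_same => //; rewrite Hg1.
Qed.

(** * Derivations *)

Definition pstep0 := PStep [::] (Clause (Atom 0 [::]) [::]) Var Var id [::].

Definition patom0 : patom := (Atom 0 [::], 0%R).

Lemma chain_goal_nth G ds R : chain G ds R -> forall i, i < size ds ->
  st_goal (nth pstep0 ds i) = (if i is i'.+1 then st_res (nth pstep0 ds i') else G).
Proof.
elim: ds G => //= s ds IH G [Hg Hc] [|i] Hi //=.
by rewrite (IH _ Hc i Hi); case: i Hi.
Qed.

Lemma chain_result G ds R : chain G ds R ->
  R = (if size ds is n'.+1 then st_res (nth pstep0 ds n') else G).
Proof.
elim: ds G => //= s ds IH G [Hg Hc]; rewrite (IH _ Hc); by case: ds IH Hc.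
Qed.

Lemma apart_nth U ds : apart U ds -> forall i, i < size ds ->
  disjoint_vars (rcvars (nth pstep0 ds i)) (U ++ flatten (map rcvars (take i ds))).
Proof.
elim: ds U => //= s ds IH U [H1 H2] [|i] Hi /=; first by rewrite cats0.
by rewrite catA; apply: IH.
Qed.

Definition avars_seq (l : seq atom) : seq nat := flatten (map avars l).

Lemma gvars_avars_seq G : gvars G = avars_seq (map fst G).
Proof. by rewrite /gvars /avars_seq -map_comp. Qed.

Lemma avars_seqP l y : y \in avars_seq l -> exists2 a, List.In a l & y \in avars a.
Proof. exact: flatten_map_In. Qed.

Lemma mem_avars_seq l y a : List.In a l -> y \in avars a -> y \in avars_seq l.
Proof. exact: mem_flatten_map. Qed.

Lemma cvars_nth_body c p y :
  p < size (cbody c) -> y \in avars (nth patom0 (cbody c) p).1 -> y \in cvars c.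
Proof.
move=> Hp Hy; rewrite /cvars mem_cat; apply/orP; right.
by apply: (mem_gvars (p := nth patom0 (cbody c) p)) => //; apply: In_nth.
Qed.

Lemma cvars_renamed_nth_body c xi p y : p < size (cbody c) ->
  y \in avars (asubst xi (nth patom0 (cbody c) p).1) -> y \in cvars (crename xi c).
Proof.
move=> Hp Hy; rewrite /cvars mem_cat; apply/orP; right.
rewrite gvars_avars_seq /= map_fst_gsubst; apply: (mem_avars_seq _ Hy).
apply: List.in_map; apply: List.in_map; exact: In_nth.
Qed.

Lemma map_nth_body (Ms Mq : pgoal) (xi : subst) :
  [seq asubst xi (nth patom0 (Ms ++ Mq) p).1 | p <- iota 0 (size Ms)] =
    map (asubst xi) (map fst Ms) /\
  [seq asubst xi (nth patom0 (Ms ++ Mq) p).1 | p <- iota (size Ms) (size Mq)] =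
    map (asubst xi) (map fst Mq).
Proof.
have H1 : [seq nth patom0 (Ms ++ Mq) p | p <- iota 0 (size Ms)] = Ms.
  by rewrite map_nth_iota0 ?size_cat ?leq_addr // take_size_cat.
have H2 : [seq nth patom0 (Ms ++ Mq) p | p <- iota (size Ms) (size Mq)] = Mq.
  by rewrite map_nth_iota ?size_cat ?addKn // drop_size_cat // take_size.
split.
  by rewrite (map_comp (fun a => asubst xi a.1)) H1 -map_comp.
by rewrite (map_comp (fun a => asubst xi a.1)) H2 -map_comp.
Qed.

Lemma map_asubst_Var l : map (asubst Var) l = l.
Proof. rewrite -[RHS]map_id; apply: eq_map => a; exact: asubst_Var. Qed.

Lemma map_nth_block (L : pgoal) o len : o + len <= size L ->
  [seq (nth patom0 L (o + j)).1 | j <- iota 0 len] = map fst (take len (drop o L)).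
Proof.
move=> H; rewrite -(map_nth_iota patom0); last by lia.
rewrite -[in RHS](addn0 o) iotaDl -!map_comp; by [].
Qed.

(** * The original derivation *)

(* The atoms of the original derivation are labelled [(0, j)] for the [j]-th atom
   of the initial goal and [(k.+1, p)] for the [p]-th body atom of the clause
   applied at step [k]. *)
Definition label := (nat * nat)%type.

Section Simulation.
Variables (SQ : pstep -> Prop) (G0 Q : pgoal) (ds : seq pstep) (spl : clause -> pgoal * pgoal).
Hypothesis Hspl : forall c, is_clause c -> sq_split SQ c (spl c).1 (spl c).2.
Hypothesis Hchain : chain G0 ds Q.
Hypothesis Hstep : forall s, List.In s ds -> is_step s.
Hypothesis HSQ : forall s, List.In s ds -> SQ s.
Hypothesis Hapart : apart (gvars G0) ds.
Variable P : seq clause.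
Hypothesis HP : forall s, List.In s ds -> List.In (st_clause s) P.
Hypothesis HSQall : stack_queue SQ.

Definition step_at i := nth pstep0 ds i.

Definition clause_at i := st_clause (step_at i).

Definition stack_len i := size (spl (clause_at i)).1.

Definition queue_len i := size (spl (clause_at i)).2.

Definition goal_at i := if i is i'.+1 then st_res (step_at i') else G0.

Fixpoint labels i : seq label :=
  if i is i'.+1 then [seq (i, p) | p <- iota 0 (stack_len i')] ++ behead (labels i') ++
                     [seq (i, p) | p <- iota (stack_len i') (queue_len i')]
  else [seq (0, j) | j <- iota 0 (size G0)].

Definition front i := head (0, 0) (labels i).

Definition label_atom (l : label) : atom :=
  if l.1 is k.+1 then asubst (st_ren (step_at k)) (nth patom0 (cbody (clause_at k)) l.2).1
  else (nth patom0 G0 l.2).1.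

Fixpoint mgu_upto i : subst :=
  if i is i'.+1 then fun x => tsubst (st_mgu (step_at i')) (mgu_upto i' x) else Var.

Definition used_vars i := gvars G0 ++ flatten (map rcvars (take i ds)).

Lemma step_at_In i : i < size ds -> List.In (step_at i) ds.
Proof. exact: In_nth. Qed.

Lemma goal_step_at i : i < size ds -> st_goal (step_at i) = goal_at i.
Proof. move=> H; rewrite /step_at (chain_goal_nth Hchain H); by case: i H. Qed.

Lemma goal_at_end : goal_at (size ds) = Q.
Proof. rewrite (chain_result Hchain); by case: (size ds). Qed.

Lemma used_varsS i : i < size ds -> used_vars i.+1 = used_vars i ++ rcvars (step_at i).
Proof. by move=> H; rewrite /used_vars (take_nth pstep0 H) map_rcons flatten_rcons catA. Qed.

Lemma step_at_apart i : i < size ds -> disjoint_vars (rcvars (step_at i)) (used_vars i).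
Proof. exact: apart_nth. Qed.

Lemma step_at_is_step i : i < size ds -> is_step (step_at i).
Proof. by move=> H; apply: Hstep; apply: step_at_In. Qed.

Lemma goal_at_cons i : i < size ds -> exists a K, goal_at i = a :: K.
Proof.
move=> H; have := step_at_is_step H; rewrite /is_step -(goal_step_at H).
by case: (st_goal (step_at i)) => // a K _; exists a, K.
Qed.

Lemma clause_at_is_clause i : i < size ds -> is_clause (clause_at i).
Proof.
move=> H; have [a [K HK]] := goal_at_cons H; rewrite -(goal_step_at H) in HK.
by have [_ ? _ _ _] := is_step_elim (step_at_is_step H) HK.
Qed.

Lemma goal_atS i : i < size ds -> exists a K,
  [/\ goal_at i = a :: K,
      idem_relevant_mgu (st_mgu (step_at i)) a.1
        (asubst (st_ren (step_at i)) (chead (clause_at i))) &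
      map fst (goal_at i.+1) = map (asubst (st_mgu (step_at i)))
        (map label_atom [seq (i.+1, p) | p <- iota 0 (stack_len i)] ++ map fst K ++
         map label_atom [seq (i.+1, p) | p <- iota (stack_len i) (queue_len i)])].
Proof.
move=> Hi; have [a [K HK]] := goal_at_cons Hi.
have HKs : st_goal (step_at i) = a :: K by rewrite goal_step_at.
have [_ Hcl _ _ [Hmu _ _ _]] := is_step_elim (step_at_is_step Hi) HKs.
have [_ Hbody _] := Hspl Hcl.
have [Hres _] := sq_res_atoms (Hspl Hcl) (HSQ (step_at_In Hi)) erefl HKs.
have [HS HQ] := map_nth_body (spl (clause_at i)).1 (spl (clause_at i)).2 (st_ren (step_at i)).
exists a, K; split => //; rewrite /= Hres -HS -HQ -!map_comp.
by rewrite /clause_at -Hbody.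
Qed.

Lemma label_atom_child_vars i p y : i < size ds -> p < stack_len i + queue_len i ->
  y \in avars (label_atom (i.+1, p)) -> y \in rcvars (step_at i).
Proof.
move=> Hi Hp; apply: cvars_renamed_nth_body.
by have [_ Hbody _] := Hspl (clause_at_is_clause Hi); rewrite Hbody size_cat.
Qed.

Lemma goal_vars_used i : i <= size ds -> {subset gvars (goal_at i) <= used_vars i}.
Proof.
elim: i => [_ y|i IH Hi]; first by rewrite /used_vars take0 cats0.
have Hi' : i < size ds by [].
have [a [K [HK Hmu Hatoms]]] := goal_atS Hi'.
have Hold y : y \in gvars (a :: K) -> y \in used_vars i.+1.
  by move=> Hy; rewrite used_varsS // mem_cat (IH (ltnW Hi)) // HK.
have Hnew y : y \in rcvars (step_at i) -> y \in used_vars i.+1.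
  by move=> Hy; rewrite used_varsS // mem_cat Hy orbT.
have Hchild l x : l \in [seq (i.+1, p) | p <- iota 0 (stack_len i)] ++
    [seq (i.+1, p) | p <- iota (stack_len i) (queue_len i)] ->
    x \in avars (label_atom l) -> x \in used_vars i.+1.
  rewrite -map_cat -iotaD => /mapP [p]; rewrite mem_iota /= => Hp ->.
  by move=> Hx; apply: Hnew; apply: (label_atom_child_vars Hi') Hx; lia.
move=> y; rewrite gvars_avars_seq Hatoms.
move=> /avars_seqP [_ /List.in_map_iff [t [<- Ht]]] /avars_asubst [x Hx Hy].
have {Ht}{}Hx : x \in used_vars i.+1.
  move: Ht; rewrite !List.in_app_iff => -[|[|]] /List.in_map_iff [l [Elt Hl]]; subst t.
  - by apply: (Hchild l) => //; rewrite mem_cat (In_mem Hl).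
  - by apply: Hold; apply: mem_gvars Hx; right.
  - by apply: (Hchild l) => //; rewrite mem_cat (In_mem Hl) orbT.
case: (idem_relevant_mgu_vars Hmu Hy) => [-> //|]; rewrite mem_cat => /orP [Hya|Hyh].
  by apply: Hold; rewrite /gvars /= mem_cat Hya.
by apply: Hnew; rewrite /rcvars /cvars mem_cat Hyh.
Qed.

Lemma mgu_upto_fresh i : i <= size ds -> forall x, x \notin used_vars i -> mgu_upto i x = Var x.
Proof.
elim: i => [//|i IH Hi x]; have Hi' : i < size ds by [].
rewrite used_varsS // mem_cat negb_or => /andP [Hx1 Hx2] /=.
rewrite IH ?(ltnW Hi) //=; case: (classic (st_mgu (step_at i) x = Var x)) => // Emu.
have [a [K [HK [_ _ _ Hrel] _]]] := goal_atS Hi'.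
have [] := Hrel x Emu; rewrite mem_cat => /orP [Hxa|Hxh] _.
  by case/negP: Hx1; apply: (goal_vars_used (ltnW Hi)); rewrite HK /gvars /= mem_cat Hxa.
by move: Hx2; rewrite /rcvars /cvars mem_cat Hxh.
Qed.

Lemma goal_at_labels i : i <= size ds ->
  map fst (goal_at i) = map (asubst (mgu_upto i)) (map label_atom (labels i)).
Proof.
elim: i => [_|i IH Hi].
  by rewrite map_asubst_Var -map_comp /= (map_comp fst (nth patom0 G0)) map_nth_iota0 ?take_size.
have Hi' : i < size ds by [].
have [a [K [HK _ Hatoms]]] := goal_atS Hi'.
have Hfr t : (forall y, y \in avars t -> y \in rcvars (step_at i)) ->
    asubst (st_mgu (step_at i)) t = asubst (mgu_upto i.+1) t.
  move=> Ht; rewrite [mgu_upto _]/= -asubst_comp; congr asubst.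
  rewrite -[LHS]asubst_Var; apply: eq_asubst => y Hy; rewrite mgu_upto_fresh ?(ltnW Hi) //.
  by apply/negP => Hu; apply: (step_at_apart Hi' (Ht y Hy) Hu).
have Hchild lo len : lo + len <= stack_len i + queue_len i ->
    map (asubst (st_mgu (step_at i))) (map label_atom [seq (i.+1, p) | p <- iota lo len]) =
    map (asubst (mgu_upto i.+1)) (map label_atom [seq (i.+1, p) | p <- iota lo len]).
  move=> Hlen; apply: eq_In_map => _ /List.in_map_iff [l [<- /List.in_map_iff [p [<- /In_mem]]]].
  rewrite mem_iota => /andP [_ Hp]; apply: Hfr => y Hy.
  by apply: (label_atom_child_vars Hi') Hy; lia.
have HK' : map fst K = map (asubst (mgu_upto i)) (map label_atom (behead (labels i))).
  by move: (IH (ltnW Hi)); rewrite HK /= => /(congr1 behead) /= ->; rewrite !behead_map.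
rewrite Hatoms [labels _]/= !map_cat; congr (_ ++ _ ++ _); try by apply: Hchild => /=; lia.
by rewrite HK' -!map_comp; apply: eq_map => l /=; rewrite asubst_comp.
Qed.

Lemma size_labels i : i <= size ds -> size (labels i) = size (goal_at i).
Proof. by move/goal_at_labels => H; rewrite -(size_map fst (goal_at i)) H !size_map. Qed.

Lemma labels_le i l : l \in labels i -> l.1 <= i.
Proof.
elim: i l => [|i IH] l /=; first by move/mapP => [j _ E]; rewrite E.
rewrite !mem_cat => /orP [/mapP [p _ E] |/orP [/mem_behead /IH H|/mapP [p _ E]]]; try by rewrite E.
exact: leqW.
Qed.

Lemma front_le k : (front k).1 <= k.
Proof.
by rewrite /front; case E: (labels k) => [//|l s] /=; apply: labels_le; rewrite E inE eqxx.
Qed.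

Lemma labels_front i : i < size ds -> labels i = front i :: behead (labels i).
Proof.
move=> H; have := size_labels (ltnW H); have [a [K ->]] := goal_at_cons H.
by rewrite /front; case: (labels i).
Qed.

Definition resolved i (l : label) := exists2 k, k < i & front k = l.

Definition created i (l : label) :=
  (l.1 = 0 /\ l.2 < size G0) \/ exists2 k, l.1 = k.+1 & k < i /\ l.2 < stack_len k + queue_len k.

Lemma resolvedS i l : resolved i l -> resolved i.+1 l.
Proof. by move=> [k Hk E]; exists k => //; apply: ltnW. Qed.

Lemma created_alive i l : i <= size ds -> created i l -> resolved i l \/ l \in labels i.
Proof.
elim: i => [_ [[E1 E2]|[k _ [//]]]|i IH Hi Hc].
  by right; case: l E1 E2 => a b /= -> H; apply/mapP; exists b => //; rewrite mem_iota.
have Hi' : i < size ds by [].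
have Hc' : created i l \/ exists2 p, l = (i.+1, p) & p < stack_len i + queue_len i.
  case: Hc => [H|[k Hk [Hki Hp]]]; first by left; left.
  case: (ltngtP k i) => Hki'; [by left; right; exists k | by move: Hki; rewrite ltnS leqNgt Hki' |].
  right; exists l.2; last by rewrite -Hki'.
  by rewrite -Hki' -Hk; case: (l).
case: Hc' => [/(IH (ltnW Hi)) [/resolvedS H|H]|[p -> Hp]]; [by left | |].
  case: (eqVneq l (front i)) => [El|Nl]; first by left; exists i.
  right; move: H; rewrite (labels_front Hi') inE (negbTE Nl) /= => H.
  by rewrite /= !mem_cat H orbT.
right; rewrite /= !mem_cat; case: (ltnP p (stack_len i)) => Hpm.
  by apply/orP; left; apply/mapP; exists p => //; rewrite mem_iota.
apply/orP; right; apply/orP; right; apply/mapP; exists p => //; rewrite mem_iota Hpm /=.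
by rewrite -(addnC (queue_len i)) addnC.
Qed.

Inductive stack_desc (i : nat) (l : label) : label -> Prop :=
| stack_desc_refl : stack_desc i l l
| stack_desc_child k p :
    k < i -> p < stack_len k -> stack_desc i l (front k) -> stack_desc i l (k.+1, p).

Lemma stack_desc0 l m : stack_desc 0 l m -> m = l.
Proof. by case. Qed.

Lemma stack_desc_trans i l1 l2 l3 : stack_desc i l1 l2 -> stack_desc i l2 l3 -> stack_desc i l1 l3.
Proof. move=> H1; elim => // k p Hk Hp _ IH; exact: stack_desc_child. Qed.

Lemma stack_desc_created i l m : created i l -> stack_desc i l m -> created i m.
Proof.
move=> Hl; elim => // k p Hk Hp _ _; right; exists k => //; split => //.
exact: leq_trans Hp (leq_addr _ _).
Qed.

Lemma stack_descS i l m : stack_desc i.+1 l m ->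
  stack_desc i l m \/ exists2 p, m = (i.+1, p) & p < stack_len i /\ stack_desc i l (front i).
Proof.
elim => [|k p Hk Hp _ [IH|[p' E [_ _]]]]; first by left; exact: stack_desc_refl.
- case: (ltngtP k i) => Hki.
  + by left; apply: stack_desc_child.
  + by move: Hk; rewrite ltnS leqNgt Hki.
  + by subst k; right; exists p.
- by have := front_le k; rewrite E /= => H; move: Hk; rewrite ltnS leqNgt H.
Qed.

Lemma mgu_upto_factor i j :
  i <= j -> exists rho, forall x, mgu_upto j x = tsubst rho (mgu_upto i x).
Proof.
elim: j => [|j IH]; first by rewrite leqn0 => /eqP ->; exists Var => x; rewrite tsubst_Var.
rewrite leq_eqVlt => /orP [/eqP ->|/IH [rho Hrho]]; first by exists Var => x; rewrite tsubst_Var.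
exists (fun x => tsubst (st_mgu (step_at j)) (rho x)) => x /=; by rewrite Hrho tsubst_comp.
Qed.

Definition theta := mgu_upto (size ds).

Lemma front_unified k : k < size ds ->
  asubst theta (label_atom (front k)) =
  asubst theta (asubst (st_ren (step_at k)) (chead (clause_at k))).
Proof.
move=> Hk; set h := asubst (st_ren (step_at k)) (chead (clause_at k)).
have [a [K HK]] := goal_at_cons Hk.
have [_ _ _ _ [[Hu _ _ _] _ _ _]] :=
  is_step_elim (step_at_is_step Hk) (etrans (goal_step_at Hk) HK).
have Ha : a.1 = asubst (mgu_upto k) (label_atom (front k)).
  by move: (goal_at_labels (ltnW Hk)); rewrite HK (labels_front Hk) => -[].
have Hh : asubst (mgu_upto k) h = h.
  rewrite -[RHS]asubst_Var; apply: eq_asubst => y Hy; apply: mgu_upto_fresh (ltnW Hk) _ _.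
  by apply/negP => Hu'; apply: (step_at_apart Hk _ Hu'); rewrite /rcvars /cvars mem_cat Hy.
have [rho Hrho] := mgu_upto_factor Hk.
have {}Hrho t : asubst theta t = asubst rho (asubst (mgu_upto k.+1) t).
  by rewrite asubst_comp; apply: eq_asubst => x _; rewrite /theta Hrho.
by rewrite !Hrho [mgu_upto _]/= -!asubst_comp -Ha Hh Hu.
Qed.

(** * Mirroring the original derivation *)

(* An entry mirrors the atom with the given label; the flag marks the
   descendants of the inserted copy of [B]. *)
Definition entry := (bool * label * atom)%type.

Definition orig_labels (E : seq entry) : seq label := [seq e.1.2 | e <- E & ~~ e.1.1].

Definition copy_labels (E : seq entry) : seq label := [seq e.1.2 | e <- E & e.1.1].

Definition entry0 : entry := (false, (0, 0), Atom 0 [::]).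

(* For a copy, every stack descendant of its label is already resolved or still
   mirrored in front of it; hence a copy at the front has a resolved label, whose
   resolution can be replayed. *)
Definition copies_covered i (E : seq entry) := forall q, q < size E -> (nth entry0 E q).1.1 ->
  forall m, stack_desc i (nth entry0 E q).1.2 m -> resolved i m \/ m \in orig_labels (take q E).

Lemma orig_labels_cat E1 E2 : orig_labels (E1 ++ E2) = orig_labels E1 ++ orig_labels E2.
Proof. by rewrite /orig_labels filter_cat map_cat. Qed.

Lemma copy_labels_cat E1 E2 : copy_labels (E1 ++ E2) = copy_labels E1 ++ copy_labels E2.
Proof. by rewrite /copy_labels filter_cat map_cat. Qed.

Lemma orig_labels_map f (lf : nat -> label) (g : nat -> atom) (ps : seq nat) :
  orig_labels [seq (f, lf p, g p) | p <- ps] = if f then [::] else [seq lf p | p <- ps].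
Proof.
elim: ps => [|p ps IH] /=; first by case: f.
by move: IH; rewrite /orig_labels /=; case: f => /= ->.
Qed.

Lemma copy_labels_map f (lf : nat -> label) (g : nat -> atom) (ps : seq nat) :
  copy_labels [seq (f, lf p, g p) | p <- ps] = if f then [seq lf p | p <- ps] else [::].
Proof.
elim: ps => [|p ps IH] /=; first by case: f.
by move: IH; rewrite /copy_labels /=; case: f => /= ->.
Qed.

Lemma nth_cat3 (X Y Z : seq entry) q : q < size (X ++ Y ++ Z) ->
  [\/ q < size X /\ nth entry0 (X ++ Y ++ Z) q = nth entry0 X q /\ take q (X ++ Y ++ Z) = take q X,
      exists2 q1, q = size X + q1 & q1 < size Y /\ nth entry0 (X ++ Y ++ Z) q = nth entry0 Y q1 /\
                  take q (X ++ Y ++ Z) = X ++ take q1 Y |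
      exists2 q2, q = size X + size Y + q2 & nth entry0 (X ++ Y ++ Z) q = nth entry0 Z q2 /\
                  take q (X ++ Y ++ Z) = X ++ Y ++ take q2 Z].
Proof.
move=> Hq; case: (ltnP q (size X)) => H1.
  by apply: Or31; split => //; rewrite nth_cat take_cat H1.
have H1' : (q < size X) = false by rewrite ltnNge H1.
case: (ltnP (q - size X) (size Y)) => H2.
  apply: Or32; exists (q - size X); first by rewrite subnKC.
  by rewrite nth_cat take_cat H1' nth_cat take_cat H2.
have H2' : (q - size X < size Y) = false by rewrite ltnNge H2.
apply: Or33; exists (q - size X - size Y); first by lia.
by rewrite nth_cat take_cat H1' nth_cat take_cat H2'.
Qed.

Lemma orig_labels_cons_copy (e : entry) E : e.1.1 = true -> orig_labels (e :: E) = orig_labels E.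
Proof. by rewrite /orig_labels /= => ->. Qed.

Lemma orig_labels_cons_orig (e : entry) E :
  e.1.1 = false -> orig_labels (e :: E) = e.1.2 :: orig_labels E.
Proof. by rewrite /orig_labels /= => ->. Qed.

Lemma copies_covered_orig i e E1 KS KQ :
  copies_covered i (e :: E1) -> e.1.1 = false -> e.1.2 = front i ->
  (forall x, List.In x KS -> x.1.1 = false) -> (forall x, List.In x KQ -> x.1.1 = false) ->
  orig_labels KS = [seq (i.+1, p) | p <- iota 0 (stack_len i)] ->
  copies_covered i.+1 (KS ++ E1 ++ KQ).
Proof.
move=> Hcov Hf Hl HS HQ HoS q Hq Hfl m Hm.
case: (nth_cat3 Hq) => [[Hq1 [En Et]]|[q1 Eq [Hq1 [En Et]]]|[q2 Eq [En Et]]].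
- by move: Hfl; rewrite En (HS _ (In_nth entry0 Hq1)).
- rewrite En in Hfl Hm.
  have Hold : forall m, stack_desc i (nth entry0 E1 q1).1.2 m ->
      resolved i m \/ m \in orig_labels (take q1.+1 (e :: E1)).
    by apply: (Hcov q1.+1).
  case: (stack_descS Hm) => [/Hold [/resolvedS H|]|[p Emp [Hp _]]]; first by left.
    rewrite /= orig_labels_cons_orig // inE => /orP [/eqP ->|H]; first by left; exists i; rewrite -?Hl.
    by right; rewrite Et orig_labels_cat mem_cat H orbT.
  right; rewrite Et orig_labels_cat mem_cat HoS Emp; apply/orP; left.
  by apply/mapP; exists p; rewrite ?mem_iota.
- case: (ltnP q2 (size KQ)) => Hq2; first by move: Hfl; rewrite En (HQ _ (In_nth entry0 Hq2)).
  by move: Hfl; rewrite En nth_default.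
Qed.

Lemma copies_covered_copy i k e E1 KS KQ :
  i <= size ds -> k < i -> front k = e.1.2 -> e.1.1 = true -> copies_covered i (e :: E1) ->
  (forall x, List.In x KS -> x.1.1 = true /\ exists2 p, x.1.2 = (k.+1, p) & p < stack_len k) ->
  (forall x, List.In x KQ ->
     x.1.1 = true /\ exists2 p, x.1.2 = (k.+1, p) & p < stack_len k + queue_len k) ->
  orig_labels E1 = labels i ->
  copies_covered i (KS ++ E1 ++ KQ).
Proof.
move=> Hi Hki Hfr Hf Hcov HS HQ HO q Hq Hfl m Hm.
case: (nth_cat3 Hq) => [[Hq1 [En Et]]|[q1 Eq [Hq1 [En Et]]]|[q2 Eq [En Et]]].
- rewrite En in Hm; have [_ [p Ep Hp]] := HS _ (In_nth entry0 Hq1); rewrite Ep in Hm.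
  have H0 : stack_desc i e.1.2 m.
    apply: stack_desc_trans Hm; apply: stack_desc_child => //; rewrite Hfr; exact: stack_desc_refl.
  by case: (Hcov 0 erefl Hf m H0) => [H|//]; left.
- rewrite En in Hfl Hm.
  case: (Hcov q1.+1 Hq1 Hfl m Hm) => [H|]; first by left.
  by rewrite /= orig_labels_cons_copy // => H; right; rewrite Et orig_labels_cat mem_cat H orbT.
- case: (ltnP q2 (size KQ)) => Hq2; last by move: Hfl; rewrite En nth_default.
  rewrite En in Hm; have [_ [p Ep Hp]] := HQ _ (In_nth entry0 Hq2); rewrite Ep in Hm.
  have Hc : created i (k.+1, p) by right; exists k.
  case: (created_alive Hi (stack_desc_created Hc Hm)) => [H|H]; first by left.
  by right; rewrite Et !orig_labels_cat !mem_cat HO H orbT.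
Qed.

Lemma size_resolved_bound i (pc : seq label) :
  i <= size ds -> uniq pc -> (forall l, l \in pc -> resolved i l) -> size pc <= size ds.
Proof.
move=> Hi Hu Hr; rewrite -(size_iota 0 (size ds)) -(size_map front).
apply: uniq_leq_size => // l /Hr [k Hk <-]; apply: map_f; rewrite mem_iota /=.
exact: leq_trans Hk Hi.
Qed.

Lemma gvars_bounded (GE : pgoal) (E : seq entry) sE b :
  map fst GE = map (fun e : entry => asubst sE e.2) E ->
  (forall e : entry, List.In e E -> forall y, y \in avars e.2 -> y < b) ->
  (forall x, x < b -> forall y, y \in tvars (sE x) -> y < b) ->
  forall y, y \in gvars GE -> y < b.
Proof.
move=> H1 H2 H3 y; rewrite gvars_avars_seq H1 => /avars_seqP [a /List.in_map_iff [e [<- He]]].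
by move/avars_asubst => [x Hx Hy]; apply: (H3 x) => //; apply: H2 He _ Hx.
Qed.

Definition ext_measure i (pc : seq label) := (size ds - i) * (size ds).+1 + (size ds - size pc).

Definition vars_ok (E : seq entry) (GE : pgoal) (sE : subst) (b : nat) (UE : seq nat) :=
  [/\ map fst GE = map (fun e : entry => asubst sE e.2) E,
      (forall y, y \in UE -> y < b),
      (forall x, b <= x -> sE x = Var x),
      (forall e : entry, List.In e E -> forall y, y \in avars e.2 -> y < b) &
      (forall x, x < b -> forall y, y \in tvars (sE x) -> y < b)].

Definition instance_ok (E : seq entry) (sE th : subst) :=
  (exists d, forall x, th x = tsubst d (sE x)) /\
  (forall e : entry, List.In e E -> asubst th e.2 = asubst theta (label_atom e.1.2)).

Definition labels_ok i (E : seq entry) := orig_labels E = labels i /\ copies_covered i E.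

Definition copies_ok i (E : seq entry) (pc : seq label) :=
  [/\ uniq (copy_labels E ++ pc), (forall l, l \in pc -> resolved i l) &
      (forall l k, l \in copy_labels E ++ pc -> l.1 = k.+1 -> front k \in pc)].

(* [GE] is the current goal, the [sE]-instance of the atoms of [E], and [th]
   maps these atoms to the [theta]-instances of the atoms they mirror; [b] bounds
   all variables in use, and [pc] lists the labels of the copies resolved so far. *)
Definition ext_inv i E pc GE sE th b UE :=
  [/\ i <= size ds /\ is_pgoal GE, vars_ok E GE sE b UE, instance_ok E sE th,
      labels_ok i E & copies_ok i E pc].

Definition children (f : bool) k (xi : subst) (ps : seq nat) : seq entry :=
  [seq (f, (k.+1, p), asubst xi (nth patom0 (cbody (clause_at k)) p).1) | p <- ps].

Lemma orig_labels_children f k xi ps :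
  orig_labels (children f k xi ps) = if f then [::] else [seq (k.+1, p) | p <- ps].
Proof. exact: orig_labels_map. Qed.

Lemma copy_labels_children f k xi ps :
  copy_labels (children f k xi ps) = if f then [seq (k.+1, p) | p <- ps] else [::].
Proof. exact: copy_labels_map. Qed.

Definition next_entries (f : bool) k xi (E1 : seq entry) :=
  children f k xi (iota 0 (stack_len k)) ++ E1 ++
  children f k xi (iota (stack_len k) (queue_len k)).

Definition resolver i (e : entry) k :=
  [/\ k < size ds, front k = e.1.2 & if e.1.1 then k < i else k == i].

Lemma In_children f k xi ps x :
  List.In x (children f k xi ps) ->
  exists2 p, p \in ps & x = (f, (k.+1, p), asubst xi (nth patom0 (cbody (clause_at k)) p).1).
Proof. by move=> /List.in_map_iff [p [<- Hp]]; exists p; rewrite ?In_mem. Qed.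

Lemma resolver_exists i e E1 : i < size ds -> labels_ok i (e :: E1) -> exists k, resolver i e k.
Proof.
move=> Hi [HO Hcov]; rewrite /resolver; case Ef: e.1.1.
  have := Hcov 0 erefl Ef e.1.2 (stack_desc_refl _ _); rewrite take0 => -[[k Hk Hkl]|//].
  by exists k; split => //; apply: leq_trans Hk (ltnW Hi).
exists i; split => //.
by move: HO; rewrite orig_labels_cons_orig // (labels_front Hi) => -[].
Qed.

Section CombinatorialStep.
Variables (i : nat) (e : entry) (E1 : seq entry) (pc : seq label) (k : nat) (xi : subst).
Hypothesis Hi : i < size ds.
Hypothesis Hk : resolver i e k.

Let f := e.1.1.
Let l := e.1.2.

Lemma labels_ok_step :
  labels_ok i (e :: E1) -> labels_ok (if f then i else i.+1) (next_entries f k xi E1).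
Proof.
have [_ Hfk Hki] := Hk.
move=> [HO Hcov]; rewrite /next_entries /f; case Ef: e.1.1 Hki => Hki.
  split; first by move: HO;
    rewrite !orig_labels_cat !orig_labels_children orig_labels_cons_copy // cats0.
  apply: (copies_covered_copy (k := k) (ltnW Hi) Hki Hfk Ef Hcov).
  - by move=> x /In_children [p + ->]; rewrite mem_iota => /andP [_ Hp]; split => //; exists p.
  - by move=> x /In_children [p + ->]; rewrite mem_iota => /andP [_ Hp]; split => //; exists p.
  - by move: HO; rewrite orig_labels_cons_copy.
rewrite {}(eqP Hki) in Hfk *.
move: HO; rewrite orig_labels_cons_orig // (labels_front Hi) => -[_ HE1].
split; first by rewrite !orig_labels_cat !orig_labels_children HE1.
apply: (copies_covered_orig Hcov Ef (esym Hfk)).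
- by move=> x /In_children [p _ ->].
- by move=> x /In_children [p _ ->].
- by rewrite orig_labels_children.
Qed.

Lemma copies_ok_step : copies_ok i (e :: E1) pc ->
  copies_ok (if f then i else i.+1) (next_entries f k xi E1) (if f then l :: pc else pc) /\
  ext_measure (if f then i else i.+1) (if f then l :: pc else pc) < ext_measure i pc.
Proof.
have [_ Hfk Hki] := Hk.
have Hcl : copy_labels (e :: E1) = if e.1.1 then e.1.2 :: copy_labels E1 else copy_labels E1.
  by rewrite /copy_labels /=; case: (e.1.1).
move=> [Hu Hres Hpar]; rewrite Hcl in Hu Hpar.
rewrite /copies_ok /next_entries /f /l !copy_labels_cat !copy_labels_children.
case Ef: e.1.1 Hki Hu Hpar => Hki Hu Hpar; last first.
  rewrite /= cats0; split; first by split => // l' /Hres /resolvedS.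
  rewrite /ext_measure; have -> : size ds - i = (size ds - i.+1).+1 by lia.
  by rewrite mulSn; set t := (_ * _); lia.
set KL := [seq (k.+1, p) | p <- iota 0 (stack_len k)] ++
          [seq (k.+1, p) | p <- iota (stack_len k) (queue_len k)].
have HKL : forall x, x \in KL -> x.1 = k.+1.
  by move=> x; rewrite mem_cat => /orP [] /mapP [p _ ->].
have Hperm : perm_eq ([seq (k.+1, p) | p <- iota 0 (stack_len k)] ++ copy_labels E1 ++
    [seq (k.+1, p) | p <- iota (stack_len k) (queue_len k)] ++ e.1.2 :: pc)
  (KL ++ (e.1.2 :: copy_labels E1 ++ pc)).
  by apply/permP => pr; rewrite /KL !count_cat /= !count_cat; lia.
have Hres' : forall l', l' \in e.1.2 :: pc -> resolved i l'.
  by move=> l'; rewrite inE => /orP [/eqP ->|/Hres //]; exists k.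
split; first split.
- rewrite -!catA (perm_uniq Hperm) cat_uniq Hu andbT; apply/andP; split.
    by rewrite /KL -map_cat -iotaD map_inj_uniq ?iota_uniq // => x y [].
  apply/hasPn => x Hx; apply/negP => /HKL Hx1.
  have := Hpar x k Hx Hx1; rewrite Hfk => Hlpc.
  by move: Hu; rewrite /= mem_cat Hlpc orbT.
- exact: Hres'.
- move=> x k'; rewrite -!catA (perm_mem Hperm) mem_cat => /orP [/HKL -> [<-]|Hx Hx1].
    by rewrite Hfk inE eqxx.
  by rewrite inE (Hpar x k' Hx Hx1) orbT.
have Hb : size (e.1.2 :: pc) <= size ds.
  apply: (size_resolved_bound (ltnW Hi)) Hres'.
  by move: Hu; rewrite /= mem_cat negb_or cat_uniq => /andP [/andP [_ ->] /and3P [_ _ ->]].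
by rewrite /ext_measure /=; move: Hb => /= Hb; lia.
Qed.

End CombinatorialStep.

Section ResolutionStep.
Variables (i : nat) (e : entry) (E1 : seq entry) (a : patom) (K : pgoal).
Variables (sE th d : subst) (b : nat) (UE : seq nat) (k : nat).
Hypothesis Hvars : vars_ok (e :: E1) (a :: K) sE b UE.
Hypothesis Hth : forall x, th x = tsubst d (sE x).
Hypothesis Hinst :
  forall e' : entry, List.In e' (e :: E1) -> asubst th e'.2 = asubst theta (label_atom e'.1.2).
Hypothesis Hk : resolver i e k.

Let c := clause_at k.
Let M := var_sup (cvars c).
Let N := maxn b M.
Let xi := swap_renaming N M.
Let in_block y := (N <= y) && (y < N + M).

(* On the fresh block [N, N + M) used by [xi], both the unifier [eta] and the
   new instance [th'] agree with [theta] after the original renaming of [c]. *)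
Let block_inst y := tsubst theta (st_ren (step_at k) (y - N)).
Let eta y := if in_block y then block_inst y else d y.
Let th' y := if in_block y then block_inst y else th y.

Lemma base_le_block : b <= N. Proof. exact: leq_maxl. Qed.

Lemma below_base_not_in_block y : y < b -> in_block y = false.
Proof. by move=> Hy; rewrite /in_block; have := base_le_block; case: leqP => //; lia. Qed.

Lemma renamed_clause_in_block y : y \in cvars (crename xi c) -> in_block y.
Proof. by apply: swap_renamed_vars; [move=> v; apply: var_sup_gt | exact: leq_maxr]. Qed.

Lemma goal_vars_below y : y \in gvars (a :: K) -> y < b.
Proof. by have [H1 _ _ H4 H5] := Hvars; apply: gvars_bounded H1 H4 H5 y. Qed.

Lemma renamed_clause_apart_goal : disjoint_vars (gvars (a :: K)) (cvars (crename xi c)).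
Proof.
by move=> y /goal_vars_below /below_base_not_in_block Hy /renamed_clause_in_block; rewrite Hy.
Qed.

Lemma asubst_renamed (g : subst) : (forall y, in_block y -> g y = block_inst y) ->
  forall t, (forall v, v \in avars t -> v \in cvars c) ->
  asubst g (asubst xi t) = asubst theta (asubst (st_ren (step_at k)) t).
Proof.
move=> Hg t Ht; rewrite !asubst_comp; apply: eq_asubst => v Hv.
have HvM : v < M by apply: var_sup_gt; apply: Ht.
rewrite /xi swap_renaming_lt //= Hg /block_inst ?addnK //.
have HMN := leq_maxr b M; rewrite /in_block /N; apply/andP; split; lia.
Qed.

Lemma eta_unifier : unifier eta a.1 (asubst xi (chead c)).
Proof.
have [[Ha _] _ _ He Hs] := Hvars; have [Hkn Hfk _] := Hk.
rewrite /unifier asubst_renamed => [|y|v Hv]; last by rewrite /cvars mem_cat Hv.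
- rewrite -front_unified // Hfk -(Hinst (or_introl erefl)) Ha asubst_comp.
  apply: eq_asubst => x Hx; rewrite Hth; apply: eq_tsubst => y Hy.
  by rewrite /eta below_base_not_in_block //; apply: Hs Hy; apply: He Hx; left.
- by rewrite /eta => ->.
Qed.

Section WithMgu.
Variable mu : subst.
Hypothesis Hmu : idem_relevant_mgu mu a.1 (asubst xi (chead c)).

Let sE' x := tsubst mu (sE x).

Lemma mgu_vars_below x : mu x <> Var x -> x < N + M /\ forall y, y \in tvars (mu x) -> y < N + M.
Proof.
have [_ _ _ Hrel] := Hmu.
have Hab z : z \in avars a.1 ++ avars (asubst xi (chead c)) -> z < N + M.
  rewrite mem_cat => /orP [Hz|Hz].
    have := goal_vars_below (y := z); rewrite /gvars /= mem_cat Hz => /(_ isT).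
    by have := base_le_block; lia.
  have /renamed_clause_in_block /andP [] // : z \in cvars (crename xi c).
  by rewrite /cvars mem_cat Hz.
by move=> /Hrel [H1 H2]; split; [apply: Hab | move=> y /H2; apply: Hab].
Qed.

Lemma renamed_body_vars p y : p < size (cbody c) ->
  y \in avars (asubst xi (nth patom0 (cbody c) p).1) -> N <= y < N + M.
Proof. by move=> Hp Hy; apply: renamed_clause_in_block; exact: cvars_renamed_nth_body Hy. Qed.

Lemma next_entry_cases e' :
  List.In e' (next_entries e.1.1 k xi E1) ->
  (exists2 p, p < size (cbody c) & e' = (e.1.1, (k.+1, p), asubst xi (nth patom0 (cbody c) p).1))
  \/ List.In e' E1.
Proof.
have [Hkn _ _] := Hk; have [_ Hbody _] := Hspl (clause_at_is_clause Hkn).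
have Hsize : size (cbody c) = stack_len k + queue_len k by rewrite Hbody size_cat.
rewrite /next_entries => /List.in_app_iff [|/List.in_app_iff [|]]; try by right.
  by move=> /In_children [p]; rewrite mem_iota Hsize => /andP [_ Hp] ->; left; exists p => //; lia.
by move=> /In_children [p]; rewrite mem_iota Hsize => /andP [_ Hp] ->; left; exists p.
Qed.

Lemma vars_ok_step GE' :
  map fst GE' = map (asubst mu) (map (asubst xi) (map fst (spl c).1) ++ map fst K ++
                                 map (asubst xi) (map fst (spl c).2)) ->
  vars_ok (next_entries e.1.1 k xi E1) GE' sE' (N + M) (UE ++ cvars (crename xi c)).
Proof.
move=> HGE'; have [[_ HK] HUE HsEid He Hs] := Hvars.
have HbN := base_le_block.
have [Hkn _ _] := Hk; have [_ Hbody _] := Hspl (clause_at_is_clause Hkn).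
have Hsize : size (cbody c) = size (spl c).1 + size (spl c).2 by rewrite Hbody size_cat.
have Hfix t : (forall y, y \in avars t -> in_block y) -> asubst sE' t = asubst mu t.
  move=> Ht; rewrite /sE' -asubst_comp; congr asubst.
  rewrite -[RHS]asubst_Var; apply: eq_asubst => y /Ht /andP [Hy _].
  by apply: HsEid; apply: leq_trans HbN Hy.
have HsE'id x : N + M <= x -> sE' x = Var x.
  move=> Hx; rewrite /sE' HsEid /=; last by lia.
  by case: (classic (mu x = Var x)) => // /mgu_vars_below [Hx' _]; lia.
split.
- have [HS HQ] := map_nth_body (spl c).1 (spl c).2 xi.
  rewrite HGE' /next_entries !map_cat -HS -HQ -Hbody; congr (_ ++ _ ++ _).
  + rewrite -!map_comp; apply: eq_In_map => p /In_mem; rewrite mem_iota => /andP [_ Hp] /=.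
    by rewrite Hfix // => y /renamed_body_vars; apply; rewrite Hsize; lia.
  + by rewrite HK -!map_comp; apply: eq_map => e' /=; rewrite asubst_comp.
  + rewrite -!map_comp; apply: eq_In_map => p /In_mem; rewrite mem_iota => /andP [_ Hp] /=.
    by rewrite Hfix // => y /renamed_body_vars; apply; rewrite Hsize.
- move=> y; rewrite mem_cat => /orP [/HUE|/renamed_clause_in_block /andP [] //]; lia.
- exact: HsE'id.
- move=> e' /next_entry_cases [[p Hp ->] y /= /(renamed_body_vars Hp) /andP [] //|He1 y Hy].
  by have := He e' (or_intror He1) y Hy; lia.
- move=> x Hx y /tvars_tsubst [z Hz Hy].
  have Hz' : z < N + M.
    case: (ltnP x b) => Hxb; first by have := Hs x Hxb z Hz; lia.
    by move: Hz; rewrite HsEid // inE => /eqP ->.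
  case: (classic (mu z = Var z)) => [Ez|/mgu_vars_below [_ /(_ y Hy) //]].
  by move: Hy; rewrite Ez inE => /eqP ->.
Qed.

Lemma instance_ok_step : instance_ok (next_entries e.1.1 k xi E1) sE' th'.
Proof.
have [_ _ HsEid He Hs] := Hvars.
have HbN := base_le_block.
have Hth'_block y : in_block y -> th' y = block_inst y by rewrite /th' => ->.
split.
  have [_ Hgen _ _] := Hmu; have [d' Hd'] := Hgen eta eta_unifier.
  exists d' => x; rewrite /sE' tsubst_comp (eq_tsubst (s2 := eta)) => [|z _]; last by rewrite Hd'.
  rewrite /th'; case: ifP => Hx.
    by move: (Hx) => /andP [Hx1 _]; rewrite HsEid /= /eta ?Hx //; apply: leq_trans Hx1.
  rewrite Hth; case: (ltnP x b) => Hxb.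
    by apply: eq_tsubst => y Hy; rewrite /eta below_base_not_in_block //; apply: Hs Hy.
  by rewrite HsEid //= /eta Hx.
move=> e' /next_entry_cases [[p Hp ->]|He1] /=.
  by rewrite (asubst_renamed Hth'_block) // => v Hv; apply: cvars_nth_body Hp Hv.
rewrite -(Hinst (or_intror He1)); apply: eq_asubst => y Hy.
by rewrite /th' below_base_not_in_block //; apply: He Hy; right.
Qed.

End WithMgu.

Lemma resolution_step : is_pgoal (a :: K) ->
  exists s sE' th' b',
    [/\ [/\ SQ s, is_step s & List.In (st_clause s) P],
      st_goal s = a :: K, disjoint_vars (rcvars s) UE,
      st_clause s = clause_at k &
      [/\ is_pgoal (st_res s),
          vars_ok (next_entries e.1.1 k xi E1) (st_res s) sE' b' (UE ++ rcvars s) &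
          instance_ok (next_entries e.1.1 k xi E1) sE' th']].
Proof.
move=> HpG; have [Hkn _ _] := Hk.
have Hc := clause_at_is_clause Hkn.
have [mu Hmu] := idem_relevant_mgu_exists eta_unifier.
have [s [HSQs Hs Hgs Hcs [Hrs Hms]]] :=
  sq_step_exists HSQall erefl HpG Hc (renaming_swap (leq_maxr b M)) renamed_clause_apart_goal Hmu.
have [Hres HpR] := sq_res_atoms (Hspl Hc) HSQs Hcs Hgs.
rewrite Hrs Hms in Hres.
have Hrc : rcvars s = cvars (crename xi c) by rewrite /rcvars Hrs Hcs.
exists s, (fun x => tsubst mu (sE x)), th', (N + M); split => //.
- by split => //; rewrite Hcs; apply: HP; apply: step_at_In.
- have [_ HUE _ _ _] := Hvars.
  move=> y; rewrite Hrc => /renamed_clause_in_block /andP [Hy _] /HUE Hyb.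
  by have := base_le_block; lia.
- by rewrite Hrc; split => //; [exact: vars_ok_step | exact: instance_ok_step].
Qed.

End ResolutionStep.

Lemma ext_step i E pc GE sE th b UE : ext_inv i E pc GE sE th b UE -> i < size ds ->
  exists s i' E' pc' GE' sE' th' b' UE',
   [/\ ext_inv i' E' pc' GE' sE' th' b' UE',
       [/\ SQ s, is_step s & List.In (st_clause s) P],
       st_goal s = GE /\ st_res s = GE',
       disjoint_vars (rcvars s) UE /\ UE' = UE ++ rcvars s &
       ext_measure i' pc' < ext_measure i pc /\
       ((i' = i.+1 /\ st_clause s = clause_at i) \/ i' = i)].
Proof.
move=> [[Hin HpG] Hvars [[d Hd] Hinst] Hlab Hcop] Hi.
case: E Hvars Hinst Hlab Hcop => [|e E1] Hvars Hinst Hlab Hcop.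
  by case: Hlab; rewrite (labels_front Hi).
case: GE HpG Hvars => [|a K] HpG Hvars; first by case: Hvars.
have [k Hk] := resolver_exists Hi Hlab.
set xi := swap_renaming (maxn b (var_sup (cvars (clause_at k)))) (var_sup (cvars (clause_at k))).
have [s [sE' [th' [b' [Hs Hgs Hdisj Hcs [HpR Hvars' Hinst']]]]]] :=
  resolution_step Hvars Hd Hinst Hk HpG.
have [Hcop' Hmeas] := copies_ok_step xi Hi Hk Hcop.
exists s, (if e.1.1 then i else i.+1), (next_entries e.1.1 k xi E1),
  (if e.1.1 then e.1.2 :: pc else pc), (st_res s), sE', th', b', (UE ++ rcvars s); split.
- split => //; first by split => //; case: Hk; case: (e.1.1) => _ _ /=; lia.
  exact: labels_ok_step.
- exact: Hs.
- by [].
- by [].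
- split => //; case: Hk; case: (e.1.1) => _ _ Hki; [by right | by left; rewrite Hcs (eqP Hki)].
Qed.

Lemma ext_final_size i E pc GE sE th b UE :
  ext_inv i E pc GE sE th b UE -> size ds <= i -> size Q <= size GE.
Proof.
move=> [[Hin _] [HGE _ _ _ _] _ [HO _] _] Hi.
have Ei : i = size ds by apply/eqP; rewrite eqn_leq Hin Hi.
subst i; rewrite -goal_at_end -size_labels // -HO -(size_map fst GE) HGE size_map.
by rewrite /orig_labels size_map size_filter count_size.
Qed.

Definition ext_derivable i GE UE := exists dsE R,
  [/\ chain GE dsE R,
      (forall s, List.In s dsE -> [/\ is_step s, SQ s & List.In (st_clause s) P]),
      apart UE dsE,
      subseqL (drop i (map st_clause ds)) (map st_clause dsE) &
      size Q <= size R].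

Lemma ext_derivation i E pc GE sE th b UE :
  ext_inv i E pc GE sE th b UE -> ext_derivable i GE UE.
Proof.
move: {2}(ext_measure i pc) (leqnn (ext_measure i pc)) => m.
elim: m i E pc GE sE th b UE => [|m IH] i E pc GE sE th b UE Hm HI;
  (have [Hi|Hi] := ltnP i (size ds); last first);
  try by exists [::], GE; split => //;
         [exists [::]; rewrite drop_oversize ?size_map | exact: ext_final_size HI Hi].
  by move: Hm; rewrite /ext_measure leqn0 addn_eq0 muln_eq0 subn_eq0 leqNgt Hi.
have [s [i' [E' [pc' [GE' [sE' [th' [b' [UE' [HI' [Hsq Hst HPs] [Hgs Hrs] [Hdisj HUE']
    [Hmeas Hcl]]]]]]]]]]] := ext_step HI Hi.
have [|dsE [R [Hch HdsE Hap [mk Hmk] HQR]]] := IH i' E' pc' GE' sE' th' b' UE' _ HI'.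
  by rewrite -ltnS; exact: leq_trans Hmeas Hm.
exists (s :: dsE), R; split => //.
- by rewrite /= Hgs Hrs.
- by move=> s' /= [<-|/HdsE].
- by rewrite /= -HUE'.
- case: Hcl => [[Ei Ec]|Ei]; subst i'; last by exists (false :: mk); rewrite /= Hmk.
  rewrite (drop_nth (st_clause pstep0)) ?size_map // (nth_map pstep0) //.
  by exists (true :: mk); rewrite /= -Hmk Ec.
Qed.

(* The atoms of [A | B | C | B pi | D] mirror the initial atoms of the original
   derivation, those of [B pi] being copies of those of [B]. *)
Definition init_entries (nA nB nC nD : nat) : seq entry :=
  [seq (false, (0, j), (nth patom0 G0 (0 + j)).1) | j <- iota 0 (nA + nB + nC)] ++
  [seq (true, (0, nA + j), (nth patom0 G0 (nA + j)).1) | j <- iota 0 nB] ++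
  [seq (false, (0, nA + nB + nC + j), (nth patom0 G0 (nA + nB + nC + j)).1) | j <- iota 0 nD].

Section Init.
Variables (A B C D : pgoal) (pi : rat -> rat).
Hypothesis HG0 : G0 = A ++ B ++ C ++ D.

Let G1 := A ++ B ++ C ++ gshift pi B ++ D.
Let E0 := init_entries (size A) (size B) (size C) (size D).

Lemma init_atoms : map fst G1 = map (fun e : entry => asubst Var e.2) E0.
Proof.
have HsG0 : size G0 = size A + size B + size C + size D by rewrite HG0 !size_cat !addnA.
rewrite (eq_map (g := fun e : entry => e.2)); last by move=> e; rewrite asubst_Var.
rewrite /E0 /init_entries !map_cat -!map_comp /comp /=.
rewrite !map_nth_block; try by rewrite HsG0; lia.
rewrite HG0 drop0.
have -> : take (size A + size B + size C) (A ++ B ++ C ++ D) = A ++ B ++ C.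
  by rewrite !catA take_size_cat // !size_cat.
have -> : take (size B) (drop (size A) (A ++ B ++ C ++ D)) = B.
  by rewrite drop_size_cat // take_size_cat.
have -> : take (size D) (drop (size A + size B + size C) (A ++ B ++ C ++ D)) = D.
  by rewrite !catA drop_size_cat ?take_size // !size_cat.
by rewrite /G1 !map_cat !catA.
Qed.

Lemma init_labels_ok : labels_ok 0 E0.
Proof.
have HsG0 : size G0 = size A + size B + size C + size D by rewrite HG0 !size_cat !addnA.
split.
  rewrite /E0 /init_entries !orig_labels_cat !orig_labels_map /= HsG0.
  rewrite [in RHS]iotaD [in RHS]map_cat; congr (_ ++ _).
  by rewrite [in RHS]add0n -[in RHS](addn0 (_ + _ + _)) [in RHS]iotaDl -map_comp.
move=> q Hq Hfl m Hm.
case: (nth_cat3 Hq) => [[Hq1 [En Et]]|[q1 Eq [Hq1 [En Et]]]|[q2 Eq [En Et]]].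
- by move: Hq1 Hfl; rewrite size_map En => Hq1; rewrite (nth_map 0).
- move: (Hq1); rewrite size_map => Hq1'.
  move: Hfl Hm; rewrite En (nth_map 0) // nth_iota; last by rewrite size_iota in Hq1'.
  rewrite add0n /= => _ /stack_desc0 ->.
  right; rewrite Et orig_labels_cat mem_cat orig_labels_map; apply/orP; left.
  apply/mapP; exists (size A + q1) => //; rewrite mem_iota /=.
  by move: Hq1; rewrite size_map size_iota; lia.
- case: (ltnP q2 (size D)) => Hq2; first by move: Hfl; rewrite En (nth_map 0) ?size_iota.
  by move: Hfl; rewrite En nth_default // size_map size_iota.
Qed.

Lemma ext_inv_init : is_pgoal G1 ->
  ext_inv 0 E0 [::] G1 Var theta (var_sup (gvars G1)) (gvars G1).
Proof.
move=> HG1; have Hb0 := @var_sup_gt (gvars G1).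
have HinG1 (e : entry) : List.In e E0 -> List.In e.2 (map fst G1).
  by move=> He; rewrite init_atoms; apply/List.in_map_iff; exists e; rewrite asubst_Var.
split => //.
- split; [exact: init_atoms | by [] | by [] | | by move=> x Hx y; rewrite inE => /eqP ->].
  move=> e He y Hy; apply: Hb0; rewrite gvars_avars_seq; exact: mem_avars_seq (HinG1 e He) Hy.
- split; first by exists theta.
  by move=> e /List.in_app_iff [|/List.in_app_iff []] /List.in_map_iff [j [<- _]].
- exact: init_labels_ok.
- rewrite /copies_ok cats0 /E0 /init_entries !copy_labels_cat !copy_labels_map /= cats0.
  split => //; last by move=> l k /mapP [j _ ->].
  by rewrite map_inj_uniq ?iota_uniq // => x y [] /addnI.
Qed.

End Init.

End Simulation.

Theorem theoremt4p3p1 (P : seq clause) (SQ : pstep -> Prop)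
    (A B C D : pgoal) (pi : rat -> rat) (X : seq clause) (Q : pgoal) :
  (forall c, List.In c P -> is_clause c) ->
  stack_queue SQ ->
  shifting pi ->
  is_pgoal (A ++ B ++ C ++ D) ->
  is_pgoal (A ++ B ++ C ++ gshift pi B ++ D) ->
  pderiv SQ P (A ++ B ++ C ++ D) X Q ->
  exists (Y : seq clause) (R : pgoal),
    [/\ pderiv SQ P (A ++ B ++ C ++ gshift pi B ++ D) Y R,
        subseqL X Y &
        (size Q <= size R)%N].
Proof.
(* Well-formedness of the clauses and of the original goal is already part of
   each step of the given derivation, and [pi] matters only through the
   hypothesis that the new goal is a p-goal. *)
move=> _ Hsq _ _ HG1 [ds [Hchain [HX [Hst [HSQ [HP Hap]]]]]].
have [spl Hspl] := sq_split_choice Hsq.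
have [dsE [R [Hch HdsE Hap' Hsub HQR]]] :=
  ext_derivation Hspl Hchain Hst HSQ Hap HP Hsq (@ext_inv_init _ ds spl A B C D pi erefl HG1).
exists (map st_clause dsE), R; split => //.
- exists dsE; split => //; split => //.
  by split; [|split; [|split]] => // s /HdsE [].
- by rewrite -HX -(drop0 (map st_clause ds)).
Qed.
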